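(* Let $m\ge 2$ be an integer and let $h:\mathbb R\to\mathbb R$ be a $2\pi$-periodic function of class $C^m$. Then $$0\le \frac{(-1)^m}{2}(m-1)!\,(m+1)!\int_0^{2\pi}\big(h(t)^2-\dot h(t)^2\big)dt+\frac{(-1)^{m-1}(m!)^2}{2\pi}\Big(\int_0^{2\pi}h(t)\,dt\Big)^2+\sum_{k=1}^{m-1}S_{m,k}\int_0^{2\pi}\big(h^{(k+1)}(t)+h^{(k-1)}(t)\big)^2dt.$$ Equality holds if and only if $h(t)=\sum_{n=0}^{m}\big(\alpha_n\cos(nt)+\beta_n\sin(nt)\big)$ for some real constants $\alpha_n,\beta_n$.
   Context: For $m\ge2$, let $P_m(t)=\prod_{j=2}^m(t-j^2)$ and let $S_{m,1},\dots,S_{m,m-1}$ be the coefficients of the polynomial $\mathcal S_m(t)=\frac{P_m(t)-P_m(1)}{t-1}=\sum_{k=1}^{m-1}S_{m,k}t^{k-1}$. $h^{(k)}$ is the $k$-th derivative, $\dot h=h'$. *)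

From Stdlib Require Import Reals Lra Lia List.
From Coquelicot Require Import Coquelicot.
Open Scope R_scope.

Definition sumR (a n : nat) (f : nat -> R) : R :=
  fold_right Rplus 0 (map f (seq a n)).

(* P_m(t) = prod_{j=2}^m (t - j^2)  (empty product = 1 for m <= 1) *)
Fixpoint Pm (m : nat) (t : R) : R :=
  match m with
  | O => 1
  | S m' => match m' with
            | O => 1
            | S _ => Pm m' t * (t - (INR m) ^ 2)
            end
  end.

Definition Cm (m : nat) (h : R -> R) : Prop :=
  (forall k, (k < m)%nat -> forall x, ex_derive (Derive_n h k) x) /\
  (forall x, continuous (Derive_n h m) x).

(* With a_n, b_n the Fourier coefficients of h, Parseval's identity turns every integral in Q
   into a sum over the modes n of (a_n^2 + b_n^2) times a polynomial in n^2.  By the identity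
   defining the S_{m,k}, mode n carries in total the weight (n^2 - 1) P_m(n^2), plus for n = 0 a
   term from (int h)^2 that cancels -P_m(0).  This weight vanishes for n <= m and is positive for
   n > m: hence Q >= 0, with equality iff h has no mode above m, that is (Fourier series of C^1
   functions converging pointwise) iff h is a trigonometric polynomial of degree at most m.
   Parseval is needed only for the C^1 functions h^(j), j < m.  The term containing h^(m) has
   coefficient S_{m,m-1} = 1, and for it Bessel's inequality suffices, since its remainder is
   nonnegative. *)

From Stdlib Require Import Reals List Arith Factorial Lra Lia.
From Coquelicot Require Import Coquelicot.
Open Scope R_scope.

Lemma sumR_0 a f : sumR a 0 f = 0.
Proof. reflexivity. Qed.

Lemma sumR_S a n f : sumR a (S n) f = f a + sumR (S a) n f.
Proof. reflexivity. Qed.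

Lemma sumR_split a n p f : sumR a (n + p) f = sumR a n f + sumR (a + n) p f.
Proof.
  revert a; induction n as [|n IH]; intros a.
  - rewrite Nat.add_0_r, sumR_0, Rplus_0_l; reflexivity.
  - rewrite Nat.add_succ_l, !sumR_S, IH, <- Nat.add_succ_comm; ring.
Qed.

Lemma sumR_Sr a n f : sumR a (S n) f = sumR a n f + f (a + n)%nat.
Proof. rewrite <- Nat.add_1_r, sumR_split, sumR_S, sumR_0; ring. Qed.

Lemma sumR_ext a n f g :
  (forall k, (a <= k < a + n)%nat -> f k = g k) -> sumR a n f = sumR a n g.
Proof.
  revert a; induction n as [|n IH]; intros a H; [reflexivity|].
  rewrite !sumR_S, (IH (S a)) by (intros; apply H; lia).
  rewrite H by lia; reflexivity.
Qed.

Lemma sumR_plus a n f g : sumR a n (fun k => f k + g k) = sumR a n f + sumR a n g.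
Proof. revert a; induction n as [|n IH]; intros; rewrite ?sumR_0, ?sumR_S, ?IH; ring. Qed.

Lemma sumR_scal a n c f : sumR a n (fun k => c * f k) = c * sumR a n f.
Proof. revert a; induction n as [|n IH]; intros; rewrite ?sumR_0, ?sumR_S, ?IH; ring. Qed.

Lemma sumR_zero a n : sumR a n (fun _ => 0) = 0.
Proof. revert a; induction n as [|n IH]; intros; rewrite ?sumR_0, ?sumR_S, ?IH; ring. Qed.

Lemma sumR_le a n f g :
  (forall k, (a <= k < a + n)%nat -> f k <= g k) -> sumR a n f <= sumR a n g.
Proof.
  revert a; induction n as [|n IH]; intros a H; rewrite ?sumR_0, ?sumR_S; [lra|].
  apply Rplus_le_compat; [apply H; lia | apply IH; intros; apply H; lia].
Qed.

Lemma sumR_nonneg a n f : (forall k, (a <= k < a + n)%nat -> 0 <= f k) -> 0 <= sumR a n f.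
Proof. intros H; rewrite <- (sumR_zero a n); now apply sumR_le. Qed.

Lemma sumR_ge_term a n f j :
  (forall k, (a <= k < a + n)%nat -> 0 <= f k) -> (a <= j < a + n)%nat -> f j <= sumR a n f.
Proof.
  intros Hf Hj; replace n with ((j - a) + S (a + n - S j))%nat by lia.
  rewrite sumR_split, sumR_S; replace (a + (j - a))%nat with j by lia.
  assert (0 <= sumR a (j - a) f) by (apply sumR_nonneg; intros; apply Hf; lia).
  assert (0 <= sumR (S j) (a + n - S j) f) by (apply sumR_nonneg; intros; apply Hf; lia).
  lra.
Qed.

Lemma Rabs_sumR a n f : Rabs (sumR a n f) <= sumR a n (fun k => Rabs (f k)).
Proof.
  revert a; induction n as [|n IH]; intros a; rewrite ?sumR_0, ?sumR_S.
  - rewrite Rabs_R0; lra.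
  - eapply Rle_trans; [apply Rabs_triang | apply Rplus_le_compat_l, IH].
Qed.

Lemma sumR_swap a n b p (F : nat -> nat -> R) :
  sumR a n (fun i => sumR b p (fun j => F i j)) = sumR b p (fun j => sumR a n (fun i => F i j)).
Proof.
  revert a; induction n as [|n IH]; intros a.
  - symmetry; apply sumR_zero.
  - rewrite sumR_S, IH, <- sumR_plus; reflexivity.
Qed.

Lemma sumR_delta a n k (F : nat -> R) :
  sumR a n (fun i => if Nat.eqb i k then F i else 0) =
  if (Nat.leb a k && Nat.ltb k (a + n))%bool then F k else 0.
Proof.
  destruct (Nat.leb_spec a k), (Nat.ltb_spec k (a + n)); simpl;
    [| rewrite (sumR_ext _ _ _ (fun _ => 0)) by
         (intros i Hi; destruct (Nat.eqb_spec i k); lia || reflexivity); apply sumR_zero ..].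
  replace n with ((k - a) + S (a + n - S k))%nat by lia.
  rewrite sumR_split, sumR_S; replace (a + (k - a))%nat with k by lia.
  rewrite Nat.eqb_refl, (sumR_ext a _ _ (fun _ => 0)), (sumR_ext (S k) _ _ (fun _ => 0)),
    !sumR_zero;
    [ring | |]; intros i Hi; destruct (Nat.eqb_spec i k); lia || reflexivity.
Qed.

(* Coquelicot states these for [plus], [mult], ... of an abstract normed module; their copies for
   [R -> R] below are usable by [apply] and [rewrite] on goals written with [Rplus], [Rmult], ... *)
Lemma continuous_Rplus (f g : R -> R) x :
  continuous f x -> continuous g x -> continuous (fun t => f t + g t) x.
Proof. exact (continuous_plus f g x). Qed.

Lemma continuous_Rminus (f g : R -> R) x :
  continuous f x -> continuous g x -> continuous (fun t => f t - g t) x.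
Proof. exact (continuous_minus f g x). Qed.

Lemma continuous_Rmult (f g : R -> R) x :
  continuous f x -> continuous g x -> continuous (fun t => f t * g t) x.
Proof. exact (continuous_mult f g x). Qed.

Lemma continuous_Rconst (c x : R) : continuous (fun _ : R => c) x.
Proof. apply continuous_const. Qed.

Lemma continuous_Rpow (f : R -> R) n x : continuous f x -> continuous (fun t => f t ^ n) x.
Proof.
  intros Hf; induction n as [|n IH].
  - apply continuous_Rconst.
  - now apply continuous_Rmult.
Qed.

Lemma continuous_sumR a n (F : nat -> R -> R) x :
  (forall k, continuous (F k) x) -> continuous (fun t => sumR a n (fun k => F k t)) x.
Proof.
  intros HF; revert a; induction n as [|n IH]; intros a.
  - apply continuous_Rconst.
  - exact (continuous_Rplus (F a) (fun t => sumR (S a) n (fun k => F k t)) x (HF a) (IH _)).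
Qed.

Lemma continuous_cos_scal (c x : R) : continuous (fun t => cos (c * t)) x.
Proof. apply (ex_derive_continuous (V := R_NormedModule)); auto_derive; auto. Qed.

Lemma continuous_sin_scal (c x : R) : continuous (fun t => sin (c * t)) x.
Proof. apply (ex_derive_continuous (V := R_NormedModule)); auto_derive; auto. Qed.

Lemma continuous_of_ex_derive (f : R -> R) x : ex_derive f x -> continuous f x.
Proof. apply (ex_derive_continuous (V := R_NormedModule)). Qed.

Lemma ex_RInt_of_continuous (f : R -> R) a b : (forall x, continuous f x) -> ex_RInt f a b.
Proof. intros Hf; apply (ex_RInt_continuous (V := R_CompleteNormedModule)); auto. Qed.

Lemma RInt_Rext (f g : R -> R) a b :
  (forall x, Rmin a b < x < Rmax a b -> f x = g x) -> RInt f a b = RInt g a b.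
Proof. exact (RInt_ext f g a b). Qed.

Lemma RInt_Rplus (f g : R -> R) a b : ex_RInt f a b -> ex_RInt g a b ->
  RInt (fun x => f x + g x) a b = RInt f a b + RInt g a b.
Proof. exact (RInt_plus f g a b). Qed.

Lemma RInt_Rminus (f g : R -> R) a b : ex_RInt f a b -> ex_RInt g a b ->
  RInt (fun x => f x - g x) a b = RInt f a b - RInt g a b.
Proof. exact (RInt_minus f g a b). Qed.

Lemma RInt_Rscal (f : R -> R) c a b : ex_RInt f a b ->
  RInt (fun x => c * f x) a b = c * RInt f a b.
Proof. exact (RInt_scal f a b c). Qed.

Lemma ex_RInt_Rplus (f g : R -> R) a b :
  ex_RInt f a b -> ex_RInt g a b -> ex_RInt (fun x => f x + g x) a b.
Proof. exact (ex_RInt_plus f g a b). Qed.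

Lemma ex_RInt_Rminus (f g : R -> R) a b :
  ex_RInt f a b -> ex_RInt g a b -> ex_RInt (fun x => f x - g x) a b.
Proof. exact (ex_RInt_minus f g a b). Qed.

Lemma ex_RInt_Rscal (f : R -> R) c a b : ex_RInt f a b -> ex_RInt (fun x => c * f x) a b.
Proof. exact (ex_RInt_scal f a b c). Qed.

Lemma RInt_Rconst (a b c : R) : RInt (fun _ => c) a b = (b - a) * c.
Proof. exact (RInt_const a b c). Qed.

Lemma RInt_sumR i n (F : nat -> R -> R) a b : (forall k, ex_RInt (F k) a b) ->
  RInt (fun x => sumR i n (fun k => F k x)) a b = sumR i n (fun k => RInt (F k) a b).
Proof.
  intros HF; revert i; induction n as [|n IH]; intros i.
  - rewrite (RInt_Rext _ (fun _ => 0)), RInt_Rconst, sumR_0, Rmult_0_r by reflexivity.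
    reflexivity.
  - assert (Hex : forall j, ex_RInt (fun x => sumR j n (fun k => F k x)) a b).
    { clear IH; induction n as [|n IHn]; intros j.
      - exact (ex_RInt_const (V := R_CompleteNormedModule) a b 0).
      - exact (ex_RInt_Rplus (F j) (fun x => sumR (S j) n (fun k => F k x)) a b (HF j) (IHn _)). }
    rewrite sumR_S, <- IH; apply (RInt_Rplus (F i) (fun x => sumR (S i) n (fun k => F k x))); auto.
Qed.

(** * Trigonometric integrals over a period *)

Lemma PI2_pos : 0 < 2 * PI.
Proof. pose proof PI_RGT_0; lra. Qed.

Definition cos_sq_int (k : nat) : R := if Nat.eqb k 0 then 2 * PI else PI.
Definition sin_sq_int (k : nat) : R := if Nat.eqb k 0 then 0 else PI.

Lemma RInt_cos_period a j :
  RInt (fun t => cos (INR j * t)) a (a + 2 * PI) = if Nat.eqb j 0 then 2 * PI else 0.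
Proof.
  destruct (Nat.eqb_spec j 0) as [->|Hj].
  - rewrite (RInt_Rext _ (fun _ => 1)), RInt_Rconst by (intros; rewrite Rmult_0_l, cos_0; reflexivity).
    simpl; ring.
  - apply not_0_INR in Hj; apply is_RInt_unique.
    replace 0 with (sin (INR j * (a + 2 * PI)) / INR j - sin (INR j * a) / INR j).
    + apply (is_RInt_derive (fun t => sin (INR j * t) / INR j)).
      * intros; auto_derive; auto; field; auto.
      * intros; apply continuous_cos_scal.
    + replace (INR j * (a + 2 * PI)) with (INR j * a + 2 * INR j * PI) by ring.
      rewrite sin_period; field; auto.
Qed.

Lemma RInt_sin_period a j : RInt (fun t => sin (INR j * t)) a (a + 2 * PI) = 0.
Proof.
  destruct (Nat.eqb_spec j 0) as [->|Hj].
  - rewrite (RInt_Rext _ (fun _ => 0)), RInt_Rconst by (intros; rewrite Rmult_0_l, sin_0; reflexivity).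
    simpl; ring.
  - apply not_0_INR in Hj; apply is_RInt_unique.
    replace 0 with (- cos (INR j * (a + 2 * PI)) / INR j - - cos (INR j * a) / INR j).
    + apply (is_RInt_derive (fun t => - cos (INR j * t) / INR j)).
      * intros; auto_derive; auto; field; auto.
      * intros; apply continuous_sin_scal.
    + replace (INR j * (a + 2 * PI)) with (INR j * a + 2 * INR j * PI) by ring.
      rewrite cos_period; field; auto.
Qed.

Lemma RInt_cos_diff_period a n k :
  RInt (fun t => cos ((INR n - INR k) * t)) a (a + 2 * PI) = if Nat.eqb n k then 2 * PI else 0.
Proof.
  destruct (le_dec k n).
  - rewrite (RInt_Rext _ (fun t => cos (INR (n - k) * t))), RInt_cos_period
      by (intros; rewrite minus_INR by lia; reflexivity).
    destruct (Nat.eqb_spec (n - k) 0), (Nat.eqb_spec n k); lia || reflexivity.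
  - rewrite (RInt_Rext _ (fun t => cos (INR (k - n) * t))), RInt_cos_period.
    + destruct (Nat.eqb_spec (k - n) 0), (Nat.eqb_spec n k); lia || reflexivity.
    + intros; rewrite minus_INR, <- cos_neg by lia; f_equal; ring.
Qed.

Lemma RInt_sin_diff_period a n k :
  RInt (fun t => sin ((INR n - INR k) * t)) a (a + 2 * PI) = 0.
Proof.
  destruct (le_dec k n).
  - rewrite (RInt_Rext _ (fun t => sin (INR (n - k) * t))) by
      (intros; rewrite minus_INR by lia; reflexivity).
    apply RInt_sin_period.
  - rewrite (RInt_Rext _ (fun t => -1 * sin (INR (k - n) * t))), RInt_Rscal, RInt_sin_period.
    + apply Rmult_0_r.
    + apply ex_RInt_of_continuous; intros; apply continuous_sin_scal.
    + intros; rewrite minus_INR by lia.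
      replace ((INR n - INR k) * x) with (- ((INR k - INR n) * x)) by ring.
      rewrite sin_neg; ring.
Qed.


Section Orthogonality.

Variables (a : R) (n k : nat).

Let ex_cos (c : R) : ex_RInt (fun t => cos (c * t)) a (a + 2 * PI).
Proof. apply ex_RInt_of_continuous; intros; apply continuous_cos_scal. Qed.

Let ex_sin (c : R) : ex_RInt (fun t => sin (c * t)) a (a + 2 * PI).
Proof. apply ex_RInt_of_continuous; intros; apply continuous_sin_scal. Qed.

Let RInt_half_sum (f g : R -> R) (s : R) :
  ex_RInt f a (a + 2 * PI) -> ex_RInt g a (a + 2 * PI) ->
  RInt (fun t => / 2 * f t + s * / 2 * g t) a (a + 2 * PI)
  = / 2 * RInt f a (a + 2 * PI) + s * / 2 * RInt g a (a + 2 * PI).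
Proof.
  intros Hf Hg.
  rewrite (RInt_Rplus (fun t => / 2 * f t) (fun t => s * / 2 * g t)), RInt_Rscal, RInt_Rscal;
    auto using ex_RInt_Rscal.
Qed.

Lemma RInt_cos_cos :
  RInt (fun t => cos (INR n * t) * cos (INR k * t)) a (a + 2 * PI)
  = if Nat.eqb n k then cos_sq_int n else 0.
Proof.
  rewrite (RInt_Rext _ (fun t => / 2 * cos ((INR n - INR k) * t) + 1 * / 2 * cos (INR (n + k) * t))).
  - rewrite RInt_half_sum, RInt_cos_diff_period, RInt_cos_period by apply ex_cos.
    unfold cos_sq_int; destruct (Nat.eqb_spec n k), (Nat.eqb_spec (n + k) 0), (Nat.eqb_spec n 0);
      try lia; simpl; field.
  - intros; rewrite plus_INR, Rmult_minus_distr_r, Rmult_plus_distr_r, cos_minus, cos_plus; field.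
Qed.

Lemma RInt_sin_sin :
  RInt (fun t => sin (INR n * t) * sin (INR k * t)) a (a + 2 * PI)
  = if Nat.eqb n k then sin_sq_int n else 0.
Proof.
  rewrite (RInt_Rext _ (fun t => / 2 * cos ((INR n - INR k) * t) + -1 * / 2 * cos (INR (n + k) * t))).
  - rewrite RInt_half_sum, RInt_cos_diff_period, RInt_cos_period by apply ex_cos.
    unfold sin_sq_int; destruct (Nat.eqb_spec n k), (Nat.eqb_spec (n + k) 0), (Nat.eqb_spec n 0);
      try lia; simpl; field.
  - intros; rewrite plus_INR, Rmult_minus_distr_r, Rmult_plus_distr_r, cos_minus, cos_plus; field.
Qed.

Lemma RInt_sin_cos : RInt (fun t => sin (INR n * t) * cos (INR k * t)) a (a + 2 * PI) = 0.
Proof.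
  rewrite (RInt_Rext _ (fun t => / 2 * sin ((INR n - INR k) * t) + 1 * / 2 * sin (INR (n + k) * t))).
  - rewrite RInt_half_sum, RInt_sin_diff_period, RInt_sin_period by apply ex_sin.
    simpl; ring.
  - intros; rewrite plus_INR, Rmult_minus_distr_r, Rmult_plus_distr_r, sin_minus, sin_plus; field.
Qed.

End Orthogonality.

(** * Fourier coefficients and Bessel's inequality *)

(* Unnormalised: the classical coefficients are [fourier_weight n * fourier_cos a f n], etc. *)
Definition fourier_cos (a : R) (f : R -> R) (n : nat) : R :=
  RInt (fun t => f t * cos (INR n * t)) a (a + 2 * PI).
Definition fourier_sin (a : R) (f : R -> R) (n : nat) : R :=
  RInt (fun t => f t * sin (INR n * t)) a (a + 2 * PI).

Definition trig_poly (al be : nat -> R) (N : nat) (t : R) : R :=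
  sumR 0 (S N) (fun n => al n * cos (INR n * t) + be n * sin (INR n * t)).

Definition fourier_weight (n : nat) : R := / cos_sq_int n.

Definition fourier_sum (a : R) (f : R -> R) (N : nat) : R -> R :=
  trig_poly (fun n => fourier_weight n * fourier_cos a f n)
            (fun n => fourier_weight n * fourier_sin a f n) N.

Definition bessel_sum (a : R) (f : R -> R) (N : nat) : R :=
  sumR 0 (S N) (fun n => fourier_weight n * (fourier_cos a f n ^ 2 + fourier_sin a f n ^ 2)).

Definition continuous_on_period (a : R) (f : R -> R) : Prop :=
  forall x, a <= x <= a + 2 * PI -> continuous f x.

Lemma fourier_weight_pos n : 0 < fourier_weight n.
Proof.
  unfold fourier_weight, cos_sq_int; pose proof PI_RGT_0.
  destruct (Nat.eqb n 0); apply Rinv_0_lt_compat; lra.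
Qed.

Lemma fourier_weight_S n : (1 <= n)%nat -> fourier_weight n = / PI.
Proof.
  intros Hn; unfold fourier_weight, cos_sq_int; destruct (Nat.eqb_spec n 0); [lia | reflexivity].
Qed.

Definition fourier_energy (f : R -> R) (n : nat) : R :=
  fourier_cos 0 f n ^ 2 + fourier_sin 0 f n ^ 2.

Lemma fourier_energy_nonneg f n : 0 <= fourier_energy f n.
Proof.
  unfold fourier_energy; pose proof (pow2_ge_0 (fourier_cos 0 f n));
    pose proof (pow2_ge_0 (fourier_sin 0 f n)); lra.
Qed.

Lemma fourier_sin_0 a f : fourier_sin a f 0 = 0.
Proof.
  unfold fourier_sin; rewrite (RInt_Rext _ (fun _ => 0)), RInt_Rconst.
  - apply Rmult_0_r.
  - intros; rewrite Rmult_0_l, sin_0; apply Rmult_0_r.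
Qed.

Lemma continuous_trig_poly al be N x : continuous (trig_poly al be N) x.
Proof.
  apply continuous_sumR; intros n.
  apply continuous_Rplus; apply continuous_Rmult;
    auto using continuous_Rconst, continuous_cos_scal, continuous_sin_scal.
Qed.

Lemma ex_RInt_on_period a f : continuous_on_period a f -> ex_RInt f a (a + 2 * PI).
Proof.
  intros Hf; apply (ex_RInt_continuous (V := R_CompleteNormedModule)); intros z Hz.
  pose proof PI2_pos; rewrite Rmin_left, Rmax_right in Hz by lra; apply Hf; lra.
Qed.

Lemma ex_RInt_mul_cos a g (c : R) :
  continuous_on_period a g -> ex_RInt (fun t => g t * cos (c * t)) a (a + 2 * PI).
Proof.
  intros Hg; apply ex_RInt_on_period; intros x Hx; auto using continuous_Rmult, continuous_cos_scal.
Qed.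

Lemma ex_RInt_mul_sin a g (c : R) :
  continuous_on_period a g -> ex_RInt (fun t => g t * sin (c * t)) a (a + 2 * PI).
Proof.
  intros Hg; apply ex_RInt_on_period; intros x Hx; auto using continuous_Rmult, continuous_sin_scal.
Qed.

Lemma RInt_mul_trig_poly a g al be N : continuous_on_period a g ->
  RInt (fun t => g t * trig_poly al be N t) a (a + 2 * PI)
  = sumR 0 (S N) (fun n => al n * fourier_cos a g n + be n * fourier_sin a g n).
Proof.
  intros Hg; unfold trig_poly.
  rewrite (RInt_Rext _ (fun t => sumR 0 (S N) (fun n =>
             al n * (g t * cos (INR n * t)) + be n * (g t * sin (INR n * t))))).
  - rewrite RInt_sumR.
    + apply sumR_ext; intros n _; unfold fourier_cos, fourier_sin.
      rewrite RInt_Rplus, RInt_Rscal, RInt_Rscal;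
        auto using ex_RInt_Rscal, ex_RInt_mul_cos, ex_RInt_mul_sin.
    + intros n; apply ex_RInt_Rplus;
        auto using ex_RInt_Rscal, ex_RInt_mul_cos, ex_RInt_mul_sin.
  - intros t _; rewrite <- sumR_scal; apply sumR_ext; intros; ring.
Qed.

Lemma fourier_cos_trig_poly a al be N k :
  fourier_cos a (trig_poly al be N) k = if Nat.leb k N then al k * cos_sq_int k else 0.
Proof.
  unfold fourier_cos.
  rewrite (RInt_Rext _ (fun t => cos (INR k * t) * trig_poly al be N t)) by (intros; ring).
  rewrite RInt_mul_trig_poly by (intros x _; apply continuous_cos_scal).
  rewrite (sumR_ext _ _ _ (fun n => if Nat.eqb n k then al n * cos_sq_int n else 0)), sumR_delta.
  - destruct (Nat.leb_spec k N), (Nat.ltb_spec k (0 + S N)); simpl; lia || reflexivity.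
  - intros n _; unfold fourier_cos, fourier_sin.
    rewrite RInt_cos_cos, (RInt_Rext _ (fun t => sin (INR n * t) * cos (INR k * t))), RInt_sin_cos
      by (intros; ring).
    destruct (Nat.eqb_spec k n), (Nat.eqb_spec n k); subst; lia || ring.
Qed.

Lemma fourier_sin_trig_poly a al be N k :
  fourier_sin a (trig_poly al be N) k = if Nat.leb k N then be k * sin_sq_int k else 0.
Proof.
  unfold fourier_sin.
  rewrite (RInt_Rext _ (fun t => sin (INR k * t) * trig_poly al be N t)) by (intros; ring).
  rewrite RInt_mul_trig_poly by (intros x _; apply continuous_sin_scal).
  rewrite (sumR_ext _ _ _ (fun n => if Nat.eqb n k then be n * sin_sq_int n else 0)), sumR_delta.
  - destruct (Nat.leb_spec k N), (Nat.ltb_spec k (0 + S N)); simpl; lia || reflexivity.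
  - intros n _; unfold fourier_cos, fourier_sin.
    rewrite RInt_sin_cos, RInt_sin_sin.
    destruct (Nat.eqb_spec k n), (Nat.eqb_spec n k); subst; lia || ring.
Qed.

Lemma RInt_mul_fourier_sum a f N : continuous_on_period a f ->
  RInt (fun t => f t * fourier_sum a f N t) a (a + 2 * PI) = bessel_sum a f N.
Proof.
  intros Hf; unfold fourier_sum; rewrite RInt_mul_trig_poly by auto; apply sumR_ext; intros; ring.
Qed.

Lemma RInt_fourier_sum_sq a f N :
  RInt (fun t => fourier_sum a f N t * fourier_sum a f N t) a (a + 2 * PI) = bessel_sum a f N.
Proof.
  unfold fourier_sum at 2; rewrite RInt_mul_trig_poly by (intros x _; apply continuous_trig_poly).
  apply sumR_ext; intros n Hn; unfold fourier_sum.
  rewrite fourier_cos_trig_poly, fourier_sin_trig_poly.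
  replace (Nat.leb n N) with true by (symmetry; apply Nat.leb_le; lia).
  unfold fourier_weight, sin_sq_int, cos_sq_int; pose proof PI_RGT_0.
  destruct (Nat.eqb_spec n 0) as [->|]; [rewrite fourier_sin_0|]; field; lra.
Qed.

Lemma RInt_sq_sub_fourier_sum a f N : continuous_on_period a f ->
  RInt (fun t => (f t - fourier_sum a f N t) ^ 2) a (a + 2 * PI)
  = RInt (fun t => f t ^ 2) a (a + 2 * PI) - bessel_sum a f N.
Proof.
  intros Hf; set (S := fourier_sum a f N).
  assert (HS : continuous_on_period a S) by (intros x _; apply continuous_trig_poly).
  assert (Hprod : forall g h, continuous_on_period a g -> continuous_on_period a h ->
            ex_RInt (fun t => g t * h t) a (a + 2 * PI))
    by (intros g h Hg Hh; apply ex_RInt_on_period; intros x Hx; auto using continuous_Rmult).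
  rewrite (RInt_Rext _ (fun t => (f t * f t - 2 * (f t * S t)) + S t * S t)) by (intros; ring).
  rewrite (RInt_Rext (fun t => f t ^ 2) (fun t => f t * f t)) by (intros; ring).
  rewrite RInt_Rplus, RInt_Rminus, RInt_Rscal; auto using ex_RInt_Rminus, ex_RInt_Rscal.
  subst S; rewrite RInt_mul_fourier_sum, RInt_fourier_sum_sq;
    auto using ex_RInt_Rminus, ex_RInt_Rscal.
  simpl; ring.
Qed.

Lemma bessel_inequality a f N : continuous_on_period a f ->
  bessel_sum a f N <= RInt (fun t => f t ^ 2) a (a + 2 * PI).
Proof.
  intros Hf.
  assert (Hsq : 0 <= RInt (fun t => (f t - fourier_sum a f N t) ^ 2) a (a + 2 * PI)).
  { apply RInt_ge_0.
    - pose proof PI2_pos; lra.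
    - apply ex_RInt_on_period; intros x Hx.
      apply continuous_Rpow, continuous_Rminus; [now apply Hf | apply continuous_trig_poly].
    - intros; apply pow2_ge_0. }
  rewrite RInt_sq_sub_fourier_sum in Hsq by auto; lra.
Qed.

Definition periodic (f : R -> R) : Prop := forall t, f (t + 2 * PI) = f t.

Lemma periodic_cos_nat n : periodic (fun t => cos (INR n * t)).
Proof.
  intros t; replace (INR n * (t + 2 * PI)) with (INR n * t + 2 * INR n * PI) by ring.
  apply cos_period.
Qed.

Lemma periodic_sin_nat n : periodic (fun t => sin (INR n * t)).
Proof.
  intros t; replace (INR n * (t + 2 * PI)) with (INR n * t + 2 * INR n * PI) by ring.
  apply sin_period.
Qed.

Lemma periodic_Derive f : periodic f -> periodic (Derive f).
Proof.
  intros Hf t; unfold Derive; f_equal; apply Lim_ext; intros y.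
  now rewrite Rplus_assoc, (Rplus_comm (2 * PI)), <- Rplus_assoc, !Hf.
Qed.

Lemma periodic_Derive_n f k : periodic f -> periodic (Derive_n f k).
Proof. intros Hf; induction k as [|k IH]; [exact Hf | exact (periodic_Derive _ IH)]. Qed.

Lemma RInt_translate (f : R -> R) c a b : (forall x, continuous f x) ->
  RInt (fun t => f (t + c)) a b = RInt f (a + c) (b + c).
Proof.
  intros Hf; rewrite <- (Rmult_1_l a), <- (Rmult_1_l b) at 2.
  rewrite <- (RInt_comp_lin (V := R_CompleteNormedModule) f 1 c a b)
    by (apply ex_RInt_of_continuous; auto).
  apply RInt_Rext; intros; unfold scal; simpl; unfold mult; simpl.
  rewrite Rmult_1_l, Rmult_1_l; reflexivity.
Qed.

Lemma RInt_periodic_shift (f : R -> R) a : periodic f -> (forall x, continuous f x) ->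
  RInt f a (a + 2 * PI) = RInt f 0 (2 * PI).
Proof.
  intros Hp Hc.
  assert (Hex : forall u v, ex_RInt f u v) by (intros; apply ex_RInt_of_continuous; auto).
  rewrite <- (RInt_Chasles (V := R_CompleteNormedModule) f a 0 (a + 2 * PI)),
    <- (RInt_Chasles (V := R_CompleteNormedModule) f 0 (2 * PI) (a + 2 * PI)) by auto.
  replace (RInt f (2 * PI) (a + 2 * PI)) with (RInt f 0 a).
  - rewrite <- (opp_RInt_swap (V := R_CompleteNormedModule) f 0 a) by auto.
    unfold plus, opp; simpl; ring.
  - rewrite <- (Rplus_0_l (2 * PI)) at 1; rewrite <- RInt_translate by auto.
    apply RInt_Rext; intros; symmetry; apply Hp.
Qed.

Lemma RInt_Derive_mul_periodic f g g' :
  periodic f -> periodic g -> (forall x, ex_derive f x) -> (forall x, continuous (Derive f) x) ->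
  (forall x, is_derive g x (g' x)) -> (forall x, continuous g' x) ->
  RInt (fun t => Derive f t * g t) 0 (2 * PI) = - RInt (fun t => f t * g' t) 0 (2 * PI).
Proof.
  intros Hpf Hpg Hf Hf' Hg Hg'.
  assert (Hcf : forall x, continuous f x) by (intros; now apply continuous_of_ex_derive).
  assert (Hcg : forall x, continuous g x) by (intros; apply continuous_of_ex_derive; eexists; apply Hg).
  assert (Hparts : is_RInt (fun t => Derive f t * g t + f t * g' t) 0 (2 * PI)
                     (f (2 * PI) * g (2 * PI) - f 0 * g 0)).
  { apply (is_RInt_derive (fun t => f t * g t)).
    - intros x _; apply (is_derive_ext (fun t => f t * g t)); [reflexivity|].
      replace (Derive f x * g x + f x * g' x) with (plus (scal (Derive f x) (g x)) (scal (f x) (g' x)))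
        by (unfold plus, scal; simpl; unfold mult; simpl; ring).
      apply (is_derive_mult f g); [now apply Derive_correct | apply Hg | intros; apply Rmult_comm].
    - intros x _; apply continuous_Rplus; apply continuous_Rmult; auto. }
  apply (is_RInt_unique (V := R_CompleteNormedModule)) in Hparts.
  rewrite <- (Rplus_0_l (2 * PI)), Hpf, Hpg, Rplus_0_l, Rminus_diag in Hparts.
  rewrite RInt_Rplus in Hparts; [simpl in Hparts |- *; lra | |];
    apply ex_RInt_of_continuous; intros; apply continuous_Rmult; auto.
Qed.

Section FourierDerive.

Variable f : R -> R.
Hypotheses (Hper : periodic f) (Hder : forall x, ex_derive f x)
           (Hcont : forall x, continuous (Derive f) x).

Let Hcf : continuous_on_period 0 f.
Proof. intros x _; now apply continuous_of_ex_derive. Qed.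

Lemma fourier_cos_Derive n : fourier_cos 0 (Derive f) n = INR n * fourier_sin 0 f n.
Proof.
  unfold fourier_cos, fourier_sin; rewrite Rplus_0_l.
  rewrite (RInt_Derive_mul_periodic f _ (fun t => - INR n * sin (INR n * t)) Hper (periodic_cos_nat n)
             Hder Hcont).
  - rewrite (RInt_Rext _ (fun t => - INR n * (f t * sin (INR n * t)))) by (intros; ring).
    rewrite RInt_Rscal; [simpl; ring |].
    pose proof (ex_RInt_mul_sin 0 f (INR n) Hcf) as Hs; rewrite Rplus_0_l in Hs; exact Hs.
  - intros; auto_derive; auto; ring.
  - intros; apply continuous_Rmult; [apply continuous_Rconst | apply continuous_sin_scal].
Qed.

Lemma fourier_sin_Derive n : fourier_sin 0 (Derive f) n = - INR n * fourier_cos 0 f n.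
Proof.
  unfold fourier_cos, fourier_sin; rewrite Rplus_0_l.
  rewrite (RInt_Derive_mul_periodic f _ (fun t => INR n * cos (INR n * t)) Hper (periodic_sin_nat n)
             Hder Hcont).
  - rewrite (RInt_Rext _ (fun t => INR n * (f t * cos (INR n * t)))) by (intros; ring).
    rewrite RInt_Rscal; [simpl; ring |].
    pose proof (ex_RInt_mul_cos 0 f (INR n) Hcf) as Hc; rewrite Rplus_0_l in Hc; exact Hc.
  - intros; auto_derive; auto; ring.
  - intros; apply continuous_Rmult; [apply continuous_Rconst | apply continuous_cos_scal].
Qed.

End FourierDerive.

(** * Pointwise convergence of Fourier series *)

Lemma is_lim_seq_terms_of_bounded_sums (c : nat -> R) M :
  (forall n, 0 <= c n) -> (forall N, sumR 0 (S N) c <= M) -> is_lim_seq c 0.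
Proof.
  intros Hc HM; set (s N := sumR 0 (S N) c).
  assert (Hs : forall N, s (S N) = s N + c (S N)) by (intros; apply sumR_Sr).
  destruct (ex_finite_lim_seq_incr s M) as [L HL];
    [intros n; rewrite Hs; specialize (Hc (S n)); lra | exact HM |].
  apply is_lim_seq_incr_1, (is_lim_seq_ext (fun N => s (S N) - s N)); [intros; rewrite Hs; ring |].
  replace (Finite 0) with (Finite (L - L)) by (f_equal; ring).
  apply is_lim_seq_minus'; [apply -> is_lim_seq_incr_1 |]; exact HL.
Qed.

Lemma is_lim_seq_of_sq (u : nat -> R) : is_lim_seq (fun n => u n ^ 2) 0 -> is_lim_seq u 0.
Proof.
  intros Hu; apply is_lim_seq_spec; intros eps.
  pose (eps2 := mkposreal _ (Rmult_lt_0_compat _ _ (cond_pos eps) (cond_pos eps))).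
  destruct (proj2 (is_lim_seq_spec _ _) Hu eps2) as [N HN].
  exists N; intros n Hn; specialize (HN n Hn); simpl in HN |- *.
  rewrite Rminus_0_r, <- (Rabs_pos_eq eps) by (left; apply cond_pos).
  apply Rsqr_lt_abs_0; unfold Rsqr; rewrite Rminus_0_r, Rmult_1_r in HN.
  rewrite <- (Rabs_pos_eq (u n * u n)) by nra; exact HN.
Qed.

Lemma riemann_lebesgue a phi : continuous_on_period a phi ->
  is_lim_seq (fourier_cos a phi) 0 /\ is_lim_seq (fourier_sin a phi) 0.
Proof.
  intros Hphi; pose proof PI_RGT_0.
  set (c n := fourier_weight n * (fourier_cos a phi n ^ 2 + fourier_sin a phi n ^ 2)).
  assert (Hc0 : forall n, 0 <= c n).
  { intros n; apply Rmult_le_pos; [left; apply fourier_weight_pos |].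
    pose proof (pow2_ge_0 (fourier_cos a phi n)); pose proof (pow2_ge_0 (fourier_sin a phi n)); lra. }
  assert (Hc : is_lim_seq (fun n => 2 * PI * c n) 0).
  { replace (Finite 0) with (Rbar_mult (2 * PI) 0) by (simpl; f_equal; ring).
    apply is_lim_seq_scal_l,
      (is_lim_seq_terms_of_bounded_sums c (RInt (fun t => phi t ^ 2) a (a + 2 * PI)));
      [exact Hc0 | intros; now apply bessel_inequality]. }
  assert (Hsq : forall n, fourier_cos a phi n ^ 2 + fourier_sin a phi n ^ 2 <= 2 * PI * c n).
  { intros n; unfold c, fourier_weight, cos_sq_int.
    pose proof (pow2_ge_0 (fourier_cos a phi n)); pose proof (pow2_ge_0 (fourier_sin a phi n)).
    destruct (Nat.eqb n 0); field_simplify; lra. }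
  split; apply is_lim_seq_of_sq, (is_lim_seq_le_le (fun _ => 0) _ (fun n => 2 * PI * c n));
    auto using is_lim_seq_const; intros n; specialize (Hsq n);
    pose proof (pow2_ge_0 (fourier_cos a phi n)); pose proof (pow2_ge_0 (fourier_sin a phi n)); lra.
Qed.

Definition dirichlet_kernel (N : nat) (u : R) : R :=
  sumR 0 (S N) (fun n => fourier_weight n * cos (INR n * u)).

Lemma continuous_dirichlet_kernel N x : continuous (dirichlet_kernel N) x.
Proof.
  apply continuous_sumR; intros n.
  apply continuous_Rmult; [apply continuous_Rconst | apply continuous_cos_scal].
Qed.

Lemma periodic_dirichlet_kernel N : periodic (dirichlet_kernel N).
Proof. intros t; apply sumR_ext; intros n _; now rewrite periodic_cos_nat. Qed.

Lemma dirichlet_kernel_closed_form N u :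
  2 * PI * sin (u / 2) * dirichlet_kernel N u = sin ((INR N + / 2) * u).
Proof.
  pose proof PI_RGT_0; unfold dirichlet_kernel, fourier_weight, cos_sq_int.
  induction N as [|N IH].
  - rewrite sumR_S, sumR_0; simpl Nat.eqb; replace (INR 0) with 0 by reflexivity.
    rewrite Rmult_0_l, cos_0, Rplus_0_l; replace (/ 2 * u) with (u / 2) by field; field; lra.
  - rewrite sumR_Sr, Rmult_plus_distr_l, IH, Nat.add_0_l, S_INR; simpl Nat.eqb.
    replace ((INR N + 1 + / 2) * u) with ((INR N + 1) * u + u / 2) by field.
    replace ((INR N + / 2) * u) with ((INR N + 1) * u - u / 2) by field.
    rewrite sin_plus, sin_minus; field; lra.
Qed.

Lemma RInt_dirichlet_kernel N : RInt (dirichlet_kernel N) (- PI) PI = 1.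
Proof.
  replace PI with (- PI + 2 * PI) at 2 by ring; unfold dirichlet_kernel.
  rewrite RInt_sumR.
  - rewrite sumR_S, (sumR_ext _ _ _ (fun _ => 0)), sumR_zero, RInt_Rscal, RInt_cos_period.
    + unfold fourier_weight, cos_sq_int; simpl; field; apply PI_neq0.
    + apply ex_RInt_of_continuous; intros; apply continuous_cos_scal.
    + intros k Hk; rewrite RInt_Rscal, RInt_cos_period.
      * destruct (Nat.eqb_spec k 0); [lia | apply Rmult_0_r].
      * apply ex_RInt_of_continuous; intros; apply continuous_cos_scal.
  - intros; apply ex_RInt_Rscal, ex_RInt_of_continuous; intros; apply continuous_cos_scal.
Qed.

Lemma fourier_sum_dirichlet f N x : (forall t, continuous f t) ->
  fourier_sum 0 f N x = RInt (fun t => f t * dirichlet_kernel N (t - x)) 0 (2 * PI).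
Proof.
  intros Hf; unfold fourier_sum, trig_poly, dirichlet_kernel.
  assert (Hcf : continuous_on_period 0 f) by (intros t _; apply Hf).
  rewrite (RInt_Rext _ (fun t => sumR 0 (S N) (fun n =>
      (fourier_weight n * cos (INR n * x)) * (f t * cos (INR n * t))
      + (fourier_weight n * sin (INR n * x)) * (f t * sin (INR n * t))))).
  - rewrite RInt_sumR.
    + apply sumR_ext; intros n _; unfold fourier_cos, fourier_sin; rewrite Rplus_0_l.
      pose proof (ex_RInt_mul_cos 0 f (INR n) Hcf) as Hc.
      pose proof (ex_RInt_mul_sin 0 f (INR n) Hcf) as Hs.
      rewrite Rplus_0_l in Hc, Hs.
      rewrite RInt_Rplus, RInt_Rscal, RInt_Rscal by auto using ex_RInt_Rscal.
      simpl; ring.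
    + intros n; apply ex_RInt_of_continuous; intros y.
      apply continuous_Rplus; apply continuous_Rmult; auto using continuous_Rconst, continuous_Rmult,
        continuous_cos_scal, continuous_sin_scal.
  - intros t _; rewrite <- sumR_scal; apply sumR_ext; intros n _.
    rewrite Rmult_minus_distr_l, cos_minus; ring.
Qed.

Lemma continuous_of_is_lim (F : R -> R) (x : R) : is_lim F x (F x) -> continuous F x.
Proof.
  intros HF; apply continuity_pt_filterlim; intros eps Heps.
  apply is_lim_spec in HF; destruct (HF (mkposreal eps Heps)) as [d Hd].
  exists d; split; [apply cond_pos |]; intros y [_ Hy].
  destruct (Req_dec y x) as [->|Hyx]; simpl; unfold R_dist.
  - rewrite Rminus_diag, Rabs_R0; exact Heps.
  - apply Hd; auto.
Qed.

Lemma is_lim_difference_quotient (F : R -> R) (x : R) : ex_derive F x ->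
  is_lim (fun u => (F (x + u) - F x) / u) 0 (Derive F x).
Proof.
  intros HF; apply Derive_correct, is_derive_Reals in HF.
  apply is_lim_spec; intros eps; destruct (HF eps (cond_pos eps)) as [d Hd].
  exists d; intros y Hy Hy0; simpl in Hy.
  apply Hd; auto; unfold ball in Hy; simpl in Hy; unfold AbsRing_ball, abs, minus, plus, opp in Hy;
    simpl in Hy; rewrite Ropp_0, Rplus_0_r in Hy; exact Hy.
Qed.

Lemma sin_half_neq_0 u : u <> 0 -> - PI <= u <= PI -> sin (u / 2) <> 0.
Proof.
  intros Hu0 Hu; pose proof PI_RGT_0.
  destruct (Rlt_dec 0 u).
  - apply Rgt_not_eq, sin_gt_0; lra.
  - replace (u / 2) with (- (- u / 2)) by field; rewrite sin_neg.
    assert (0 < sin (- u / 2)) by (apply sin_gt_0; lra); lra.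
Qed.

(* Extended at [u = 0] by its limit, so that it is continuous on [[-PI, PI]]. *)
Definition dirichlet_quotient (f : R -> R) (x u : R) : R :=
  if Req_EM_T u 0 then 2 * Derive f x else (f (u + x) - f x) / sin (u / 2).

Lemma continuous_dirichlet_quotient_0 f x : ex_derive f x -> continuous (dirichlet_quotient f x) 0.
Proof.
  intros Hd; apply continuous_of_is_lim.
  assert (Hsin : is_lim (fun u => (sin ((0 + u) / 2) - sin (0 / 2)) / u) 0
                        (Derive (fun u => sin (u / 2)) 0))
    by (apply (is_lim_difference_quotient (fun u => sin (u / 2))); auto_derive; auto).
  assert (Hsin' : Derive (fun u => sin (u / 2)) 0 = / 2)
    by (apply is_derive_unique; auto_derive; auto; rewrite Rmult_0_l, cos_0; field).
  rewrite Hsin' in Hsin.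
  apply (is_lim_ext_loc (fun u => (f (x + u) - f x) / u / ((sin ((0 + u) / 2) - sin (0 / 2)) / u))).
  - exists (mkposreal _ PI_RGT_0); intros u Hu Hu0; simpl in Hu.
    unfold ball in Hu; simpl in Hu; unfold AbsRing_ball, abs, minus, plus, opp in Hu; simpl in Hu.
    rewrite Ropp_0, Rplus_0_r in Hu; apply Rabs_lt_between in Hu.
    unfold dirichlet_quotient; destruct (Req_EM_T u 0) as [|_]; [contradiction |].
    pose proof (sin_half_neq_0 u Hu0 ltac:(lra)).
    rewrite Rplus_0_l, Rdiv_0_l, sin_0, Rminus_0_r, (Rplus_comm u); field; auto.
  - unfold dirichlet_quotient; destruct (Req_EM_T 0 0) as [_|]; [| contradiction].
    replace (Finite (2 * Derive f x)) with (Rbar_div (Derive f x) (/ 2)) by (simpl; f_equal; field).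
    apply is_lim_div; auto using is_lim_difference_quotient.
    + intros E; injection E; lra.
    + exact I.
Qed.

Lemma continuous_dirichlet_quotient f x u : (forall y, continuous f y) -> ex_derive f x ->
  - PI <= u <= PI -> continuous (dirichlet_quotient f x) u.
Proof.
  intros Hc Hd Hu; destruct (Req_dec u 0) as [->|Hu0]; [now apply continuous_dirichlet_quotient_0 |].
  apply (continuous_ext_loc _ (fun y => (f (y + x) - f x) * / sin (y / 2))).
  - assert (Hp : 0 < Rabs u) by (apply Rabs_pos_lt; auto).
    exists (mkposreal _ Hp); intros y Hy; simpl in Hy.
    unfold ball in Hy; simpl in Hy; unfold AbsRing_ball, abs, minus, plus, opp in Hy; simpl in Hy.
    unfold dirichlet_quotient; destruct (Req_EM_T y 0) as [->|]; [| reflexivity].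
    rewrite Rplus_0_l, Rabs_Ropp in Hy; lra.
  - apply continuous_Rmult.
    + apply continuous_Rminus; [| apply continuous_Rconst].
      apply (continuous_comp (fun y => y + x) f); [| apply Hc].
      apply continuous_Rplus; [apply continuous_id | apply continuous_Rconst].
    + apply continuous_Rinv_comp; [| now apply sin_half_neq_0].
      apply continuous_of_ex_derive; auto_derive; auto.
Qed.

Lemma dirichlet_kernel_split f x N u : - PI < u < PI ->
  (f (u + x) - f x) * dirichlet_kernel N u
  = / (2 * PI) * (dirichlet_quotient f x u * cos (u / 2) * sin (INR N * u)
                  + (f (u + x) - f x) * cos (INR N * u)).
Proof.
  intros Hu; pose proof PI_RGT_0; unfold dirichlet_quotient.
  destruct (Req_EM_T u 0) as [->|Hu0].
  - rewrite Rplus_0_l, Rmult_0_r, sin_0, !Rminus_diag; ring.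
  - assert (Hs : sin (u / 2) <> 0) by (apply sin_half_neq_0; auto; lra).
    pose proof (dirichlet_kernel_closed_form N u) as HK.
    replace ((INR N + / 2) * u) with (INR N * u + u / 2) in HK by field.
    rewrite sin_plus in HK.
    replace (dirichlet_kernel N u)
      with ((sin (INR N * u) * cos (u / 2) + cos (INR N * u) * sin (u / 2)) / (2 * PI * sin (u / 2)))
      by (rewrite <- HK; field; lra).
    field; lra.
Qed.

Section PointwiseConvergence.

Variables (f : R -> R) (x : R).
Hypotheses (Hper : periodic f) (Hder : forall y, ex_derive f y).

Let Hcf : forall y, continuous f y.
Proof. intros; now apply continuous_of_ex_derive. Qed.

Let Hshift : forall y, continuous (fun u => f (u + x)) y.
Proof.
  intros y; apply (continuous_comp (fun u => u + x) f); [| apply Hcf].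
  apply continuous_Rplus; [apply continuous_id | apply continuous_Rconst].
Qed.

Let quotient_on_period : continuous_on_period (- PI) (fun u => dirichlet_quotient f x u * cos (u / 2)).
Proof.
  intros y Hy; apply continuous_Rmult.
  - apply continuous_dirichlet_quotient; auto; lra.
  - apply continuous_of_ex_derive; auto_derive; auto.
Qed.

Let increment_on_period : continuous_on_period (- PI) (fun u => f (u + x) - f x).
Proof. intros y _; apply continuous_Rminus; [apply Hshift | apply continuous_Rconst]. Qed.

Lemma fourier_sum_centered N :
  fourier_sum 0 f N x = RInt (fun u => f (u + x) * dirichlet_kernel N u) (- PI) PI.
Proof.
  assert (Hc : forall y, continuous (fun t => f t * dirichlet_kernel N (t - x)) y).
  { intros y; apply continuous_Rmult; [apply Hcf |].
    apply (continuous_comp (fun t => t - x)); [| apply continuous_dirichlet_kernel].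
    apply continuous_Rminus; [apply continuous_id | apply continuous_Rconst]. }
  rewrite fourier_sum_dirichlet by exact Hcf.
  rewrite <- (RInt_periodic_shift _ (x - PI)); [| | exact Hc].
  - transitivity (RInt (fun u => f (u + x) * dirichlet_kernel N (u + x - x)) (- PI) PI).
    + rewrite (RInt_translate (fun t => f t * dirichlet_kernel N (t - x))) by exact Hc.
      f_equal; ring.
    + apply RInt_Rext; intros; do 3 f_equal; ring.
  - intros t; rewrite Hper; replace (t + 2 * PI - x) with (t - x + 2 * PI) by ring.
    now rewrite periodic_dirichlet_kernel.
Qed.

Lemma fourier_sum_sub_dirichlet N :
  fourier_sum 0 f N x - f x
  = / (2 * PI) * (fourier_sin (- PI) (fun u => dirichlet_quotient f x u * cos (u / 2)) N
                  + fourier_cos (- PI) (fun u => f (u + x) - f x) N).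
Proof.
  pose proof PI_RGT_0; rewrite fourier_sum_centered.
  transitivity (RInt (fun u => (f (u + x) - f x) * dirichlet_kernel N u) (- PI) PI).
  { rewrite (RInt_Rext (fun u => (f (u + x) - f x) * dirichlet_kernel N u)
                       (fun u => f (u + x) * dirichlet_kernel N u - f x * dirichlet_kernel N u))
      by (intros; ring).
    rewrite RInt_Rminus, RInt_Rscal, RInt_dirichlet_kernel;
      try (apply ex_RInt_of_continuous; intros;
           auto using continuous_Rmult, continuous_Rconst, continuous_dirichlet_kernel).
    simpl; ring. }
  rewrite (RInt_Rext _ (fun u => / (2 * PI) * (dirichlet_quotient f x u * cos (u / 2) * sin (INR N * u))
                                 + / (2 * PI) * ((f (u + x) - f x) * cos (INR N * u)))).
  - assert (Hend : - PI + 2 * PI = PI) by ring.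
    pose proof (ex_RInt_mul_sin _ _ (INR N) quotient_on_period) as Hs.
    pose proof (ex_RInt_mul_cos _ _ (INR N) increment_on_period) as Hc.
    unfold fourier_sin, fourier_cos; rewrite Hend in Hs, Hc |- *.
    rewrite RInt_Rplus, RInt_Rscal, RInt_Rscal by auto using ex_RInt_Rscal.
    ring.
  - intros u Hu; rewrite Rmin_left, Rmax_right in Hu by lra.
    rewrite <- Rmult_plus_distr_l, <- dirichlet_kernel_split by lra; ring.
Qed.

Theorem fourier_sum_pointwise : is_lim_seq (fun N => fourier_sum 0 f N x) (f x).
Proof.
  destruct (riemann_lebesgue _ _ quotient_on_period) as [_ Hs].
  destruct (riemann_lebesgue _ _ increment_on_period) as [Hc _].
  apply (is_lim_seq_ext (fun N => f x + (fourier_sum 0 f N x - f x))); [intros; ring |].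
  replace (Finite (f x)) with (Finite (f x + / (2 * PI) * (0 + 0))) by (f_equal; ring).
  apply is_lim_seq_plus'; [apply is_lim_seq_const |].
  apply (is_lim_seq_ext (fun N => / (2 * PI) *
           (fourier_sin (- PI) (fun u => dirichlet_quotient f x u * cos (u / 2)) N
            + fourier_cos (- PI) (fun u => f (u + x) - f x) N)));
    [intros; symmetry; apply fourier_sum_sub_dirichlet |].
  apply (is_lim_seq_scal_l _ _ (Finite (0 + 0))), is_lim_seq_plus'; assumption.
Qed.

End PointwiseConvergence.

(** * Parseval's identity for C^1 functions *)

Lemma Cm_ex_derive m h k x : Cm m h -> (k < m)%nat -> ex_derive (Derive_n h k) x.
Proof. intros [Hd _] Hk; now apply Hd. Qed.

Lemma Cm_continuous m h k x : Cm m h -> (k <= m)%nat -> continuous (Derive_n h k) x.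
Proof.
  intros Hh Hk; destruct (Nat.eq_dec k m) as [->|]; [apply Hh |].
  apply continuous_of_ex_derive, (Cm_ex_derive m); auto; lia.
Qed.

Lemma Cm_Derive_n m h k : Cm m h -> (k < m)%nat -> Cm 1 (Derive_n h k).
Proof.
  intros Hh Hk; split.
  - intros j Hj x; replace j with 0%nat by lia; exact (Cm_ex_derive m h k x Hh Hk).
  - intros x; exact (Cm_continuous m h (S k) x Hh Hk).
Qed.

Lemma sum_inv_sq_tail N d : (1 <= N)%nat ->
  sumR (S N) d (fun n => / INR n ^ 2) <= / INR N - / INR (N + d).
Proof.
  intros HN; induction d as [|d IH].
  - rewrite sumR_0, Nat.add_0_r; lra.
  - rewrite sumR_Sr; replace (S N + d)%nat with (S (N + d)) by lia.
    rewrite Nat.add_succ_r, S_INR.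
    assert (Hq : 1 <= INR (N + d)) by (apply (le_INR 1); lia).
    assert (/ (INR (N + d) + 1) ^ 2 <= / INR (N + d) - / (INR (N + d) + 1)).
    { replace (/ INR (N + d) - / (INR (N + d) + 1)) with (/ (INR (N + d) * (INR (N + d) + 1)))
        by (field; lra).
      apply Rinv_le_contravar; [apply Rmult_lt_0_compat |]; nra. }
    lra.
Qed.

Lemma fourier_sum_add_sub a f N d x :
  fourier_sum a f (N + d) x - fourier_sum a f N x
  = sumR (S N) d (fun n => fourier_weight n *
      (fourier_cos a f n * cos (INR n * x) + fourier_sin a f n * sin (INR n * x))).
Proof.
  unfold fourier_sum, trig_poly; rewrite <- Nat.add_succ_l, sumR_split, Nat.add_0_l.
  rewrite (sumR_ext (S N) d _ (fun n => fourier_weight n *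
      (fourier_cos a f n * cos (INR n * x) + fourier_sin a f n * sin (INR n * x)))) by (intros; ring).
  ring.
Qed.

Lemma bessel_tail_le g N d : (forall x, continuous g x) ->
  sumR (S N) d (fun n => fourier_weight n * fourier_energy g n) <= RInt (fun t => g t ^ 2) 0 (2 * PI).
Proof.
  intros Hg; pose proof (bessel_inequality 0 g (N + d) (fun x _ => Hg x)) as Hb.
  rewrite Rplus_0_l in Hb; unfold bessel_sum in Hb.
  rewrite <- Nat.add_succ_l, sumR_split, Nat.add_0_l in Hb.
  assert (0 <= sumR 0 (S N) (fun n => fourier_weight n * fourier_energy g n)).
  { apply sumR_nonneg; intros; apply Rmult_le_pos;
      [left; apply fourier_weight_pos | apply fourier_energy_nonneg]. }
  unfold fourier_energy in *; lra.
Qed.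

Lemma Rabs_cos_sin_comb a b t : Rabs (a * cos t + b * sin t) <= Rabs a + Rabs b.
Proof.
  eapply Rle_trans; [apply Rabs_triang |]; rewrite !Rabs_mult.
  pose proof (Rabs_pos a); pose proof (Rabs_pos b).
  pose proof (Rabs_le (cos t) 1 (COS_bound t)); pose proof (Rabs_le (sin t) 1 (SIN_bound t)).
  nra.
Qed.

Section UniformConvergence.

Variable f : R -> R.
Hypotheses (Hper : periodic f) (Hf : Cm 1 f).

Let Hder : forall x, ex_derive f x.
Proof. intros; exact (Cm_ex_derive 1 f 0 x Hf ltac:(lia)). Qed.

Let Hcont : forall x, continuous (Derive f) x.
Proof. intros; exact (Cm_continuous 1 f 1 x Hf (le_n 1)). Qed.

Let C := RInt (fun t => Derive f t ^ 2) 0 (2 * PI).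

(* Integration by parts trades [1/n] for a derivative; AM-GM with weight [lam] then separates
   the factors. *)
Lemma fourier_coef_bound n lam : (1 <= n)%nat -> 0 < lam ->
  Rabs (fourier_cos 0 f n) + Rabs (fourier_sin 0 f n)
  <= lam / 2 * fourier_energy (Derive f) n + / (lam * INR n ^ 2).
Proof.
  intros Hn Hl; assert (Hn' : 1 <= INR n) by (apply (le_INR 1); lia).
  unfold fourier_energy; rewrite fourier_cos_Derive, fourier_sin_Derive by auto.
  assert (Hamgm : forall p, 2 * Rabs p <= lam * (INR n * p) ^ 2 + / (lam * INR n ^ 2)).
  { intros p.
    assert (Hsq : 0 <= (lam * INR n ^ 2 * Rabs p - 1) ^ 2 / (lam * INR n ^ 2))
      by (apply Rdiv_le_0_compat; [apply pow2_ge_0 | apply Rmult_lt_0_compat; nra]).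
    replace ((INR n * p) ^ 2) with ((INR n * Rabs p) ^ 2)
      by (rewrite <- !Rsqr_pow2, !Rsqr_mult, <- Rsqr_abs; reflexivity).
    replace ((lam * INR n ^ 2 * Rabs p - 1) ^ 2 / (lam * INR n ^ 2))
      with (lam * (INR n * Rabs p) ^ 2 + / (lam * INR n ^ 2) - 2 * Rabs p) in Hsq by (field; lra).
    lra. }
  pose proof (Hamgm (fourier_sin 0 f n)); pose proof (Hamgm (fourier_cos 0 f n)).
  replace ((- INR n * fourier_cos 0 f n) ^ 2) with ((INR n * fourier_cos 0 f n) ^ 2) by ring.
  lra.
Qed.

Lemma fourier_sum_tail_bound N M x lam : (1 <= N)%nat -> (N <= M)%nat -> 0 < lam ->
  Rabs (fourier_sum 0 f M x - fourier_sum 0 f N x) <= lam * C / 2 + / (PI * lam * INR N).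
Proof.
  intros HN HM Hl; pose proof PI_RGT_0.
  replace M with (N + (M - N))%nat by lia; rewrite fourier_sum_add_sub.
  eapply Rle_trans; [apply Rabs_sumR |].
  eapply Rle_trans.
  { apply (sumR_le _ _ _ (fun n => lam / 2 * (fourier_weight n * fourier_energy (Derive f) n)
                                   + / (PI * lam) * / INR n ^ 2)).
    intros n Hn; rewrite fourier_weight_S by lia.
    assert (Hn' : 0 < INR n) by (apply lt_0_INR; lia).
    rewrite Rabs_mult, Rabs_pos_eq by (left; apply Rinv_0_lt_compat; lra).
    pose proof (Rabs_cos_sin_comb (fourier_cos 0 f n) (fourier_sin 0 f n) (INR n * x)).
    pose proof (fourier_coef_bound n lam ltac:(lia) Hl).
    replace (lam / 2 * (/ PI * fourier_energy (Derive f) n) + / (PI * lam) * / INR n ^ 2)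
      with (/ PI * (lam / 2 * fourier_energy (Derive f) n + / (lam * INR n ^ 2))) by (field; lra).
    apply Rmult_le_compat_l; [left; apply Rinv_0_lt_compat |]; lra. }
  rewrite sumR_plus, (sumR_scal _ _ (lam / 2)), (sumR_scal _ _ (/ (PI * lam))).
  pose proof (bessel_tail_le (Derive f) N (M - N) Hcont) as Htail.
  pose proof (sum_inv_sq_tail N (M - N) HN) as Hinv.
  assert (0 < / INR (N + (M - N))) by (apply Rinv_0_lt_compat, lt_0_INR; lia).
  assert (0 < / (PI * lam)) by (apply Rinv_0_lt_compat, Rmult_lt_0_compat; lra).
  replace (/ (PI * lam * INR N)) with (/ (PI * lam) * / INR N)
    by (field; repeat split; try lra; apply not_0_INR; lia).
  apply Rplus_le_compat.
  - replace (lam * C / 2) with (lam / 2 * C) by field; apply Rmult_le_compat_l; [lra | exact Htail].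
  - apply Rmult_le_compat_l; lra.
Qed.

Lemma fourier_sum_error_bound N x lam : (1 <= N)%nat -> 0 < lam ->
  Rabs (f x - fourier_sum 0 f N x) <= lam * C / 2 + / (PI * lam * INR N).
Proof.
  intros HN Hl.
  change (Rbar_le (Rabs (f x - fourier_sum 0 f N x)) (lam * C / 2 + / (PI * lam * INR N))).
  apply (is_lim_seq_le_loc (fun M => Rabs (fourier_sum 0 f M x - fourier_sum 0 f N x))
           (fun _ => lam * C / 2 + / (PI * lam * INR N))); [| | apply is_lim_seq_const].
  - exists N; intros M HM; now apply fourier_sum_tail_bound.
  - apply (is_lim_seq_abs _ (f x - fourier_sum 0 f N x)), is_lim_seq_minus';
      [apply fourier_sum_pointwise; auto | apply is_lim_seq_const].
Qed.

Theorem fourier_sum_uniform delta : 0 < delta ->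
  exists N1, forall N x, (N1 <= N)%nat -> Rabs (f x - fourier_sum 0 f N x) <= delta.
Proof.
  intros Hd; pose proof PI_RGT_0.
  assert (HC : 0 <= C).
  { apply RInt_ge_0; [lra | | intros; apply pow2_ge_0].
    apply ex_RInt_of_continuous; intros; now apply continuous_Rpow. }
  set (lam := delta / (C + 1)).
  assert (Hl : 0 < lam) by (apply Rdiv_lt_0_compat; lra).
  assert (HlC : lam * C / 2 <= delta / 2).
  { unfold lam; apply (Rmult_le_reg_l (C + 1)); [lra |].
    replace ((C + 1) * (delta / (C + 1) * C / 2)) with (delta * C / 2) by (field; lra); nra. }
  destruct (INR_archimed (PI * lam * (delta / 2)) 1) as [N1 HN1];
    [apply Rmult_lt_0_compat; [apply Rmult_lt_0_compat |]; lra |].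
  exists (max N1 1); intros N x HN.
  assert (HNpos : 1 <= INR N) by (apply (le_INR 1); lia).
  assert (HNN : INR N1 <= INR N) by (apply le_INR; lia).
  assert (/ (PI * lam * INR N) <= delta / 2).
  { apply (Rmult_le_reg_l (PI * lam * INR N)); [apply Rmult_lt_0_compat; nra |].
    rewrite Rinv_r by (apply Rgt_not_eq, Rmult_lt_0_compat; nra).
    assert (0 < PI * lam * (delta / 2)) by (apply Rmult_lt_0_compat; [apply Rmult_lt_0_compat |]; lra).
    nra. }
  pose proof (fourier_sum_error_bound N x lam ltac:(lia) Hl); lra.
Qed.

Theorem parseval : is_lim_seq (bessel_sum 0 f) (RInt (fun t => f t ^ 2) 0 (2 * PI)).
Proof.
  pose proof PI_RGT_0; apply is_lim_seq_spec; intros eps.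
  set (delta := sqrt (eps / (4 * PI))).
  assert (Heps : 0 < eps / (4 * PI)) by (apply Rdiv_lt_0_compat; [apply cond_pos | lra]).
  assert (Hdelta : delta ^ 2 = eps / (4 * PI))
    by (unfold delta; rewrite <- Rsqr_pow2, Rsqr_sqrt; [reflexivity | lra]).
  assert (Hd0 : 0 < delta) by (apply sqrt_lt_R0, Rdiv_lt_0_compat; [apply cond_pos | lra]).
  destruct (fourier_sum_uniform delta Hd0) as [N1 HN1]; exists N1; intros N HN.
  assert (Hcf : continuous_on_period 0 f) by (intros x _; now apply continuous_of_ex_derive).
  pose proof (bessel_inequality 0 f N Hcf) as Hb.
  pose proof (RInt_sq_sub_fourier_sum 0 f N Hcf) as Hid.
  rewrite Rplus_0_l in Hb, Hid.
  assert (Herr : RInt (fun t => (f t - fourier_sum 0 f N t) ^ 2) 0 (2 * PI)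
                 <= RInt (fun _ => delta ^ 2) 0 (2 * PI)).
  { apply RInt_le; [lra | | apply ex_RInt_const |].
    - apply ex_RInt_of_continuous; intros; apply continuous_Rpow, continuous_Rminus;
        [now apply continuous_of_ex_derive | apply continuous_trig_poly].
    - intros x _; rewrite <- (pow2_abs (f x - _)); apply pow_incr; split; [apply Rabs_pos | auto]. }
  rewrite RInt_Rconst, Hdelta in Herr.
  rewrite Rabs_minus_sym, Rabs_pos_eq by lra.
  replace ((2 * PI - 0) * (eps / (4 * PI))) with (eps / 2) in Herr by (field; lra).
  pose proof (cond_pos eps); lra.
Qed.

End UniformConvergence.

(** * The polynomial P_m *)

Lemma Pm_S k t : (1 <= k)%nat -> Pm (S k) t = Pm k t * (t - INR (S k) ^ 2).
Proof. intros Hk; destruct k; [lia | reflexivity]. Qed.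

Lemma Pm_root m n : (2 <= n <= m)%nat -> Pm m (INR n ^ 2) = 0.
Proof.
  induction m as [|m IH]; intros Hn; [lia |].
  rewrite Pm_S by lia; destruct (Nat.eq_dec n (S m)) as [->|]; [ring |].
  rewrite IH by lia; ring.
Qed.

Lemma Pm_pos m n : (1 <= m)%nat -> (m < n)%nat -> 0 < Pm m (INR n ^ 2).
Proof.
  induction m as [|[|m] IH]; intros Hm Hn; [lia | simpl; lra |].
  rewrite Pm_S by lia; apply Rmult_lt_0_compat; [apply IH; lia |].
  assert (INR (S (S m)) < INR n) by (apply lt_INR; lia).
  pose proof (pos_INR (S (S m))); nra.
Qed.

Lemma Pm_at_1 m : (2 <= m)%nat ->
  Pm m 1 = (-1) ^ (m - 1) * INR (fact (m - 1)) * INR (fact (m + 1)) / 2.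
Proof.
  intros Hm; replace m with (m - 2 + 2)%nat at 1 by lia.
  replace (m - 1)%nat with (m - 2 + 1)%nat by lia; replace (m + 1)%nat with (m - 2 + 3)%nat by lia.
  induction (m - 2)%nat as [|p IH]; [simpl; lra |].
  replace (S p + 2)%nat with (S (p + 2)) by lia; rewrite Pm_S, IH by lia.
  replace (S p + 1)%nat with (S (p + 1)) by lia; replace (S p + 3)%nat with (S (p + 3)) by lia.
  rewrite (fact_simpl (p + 1)), (fact_simpl (p + 3)), !mult_INR, !S_INR, !plus_INR; simpl; field.
Qed.

Lemma Pm_at_0 m : (1 <= m)%nat -> Pm m 0 = (-1) ^ (m - 1) * INR (fact m) ^ 2.
Proof.
  induction m as [|[|m] IH]; intros Hm; [lia | simpl; lra |].
  rewrite Pm_S, IH by lia; replace (S (S m) - 1)%nat with (S (S m - 1)) by lia.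
  rewrite (fact_simpl (S m)), mult_INR; simpl pow; ring.
Qed.

(* The reversal of [Pm m]: its value at [0] is the leading coefficient of [Pm m]. *)
Fixpoint Pm_rev (m : nat) (u : R) : R :=
  match m with
  | O => 1
  | S m' => match m' with
            | O => 1
            | S _ => Pm_rev m' u * (1 - INR m ^ 2 * u)
            end
  end.

Lemma Pm_rev_S k u : (1 <= k)%nat -> Pm_rev (S k) u = Pm_rev k u * (1 - INR (S k) ^ 2 * u).
Proof. intros Hk; destruct k; [lia | reflexivity]. Qed.

Lemma Pm_rev_inv m u : (1 <= m)%nat -> u <> 0 -> u ^ (m - 1) * Pm m (/ u) = Pm_rev m u.
Proof.
  intros Hm Hu; induction m as [|[|m] IH]; [lia | simpl; ring |].
  rewrite Pm_S, Pm_rev_S, <- IH by lia.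
  replace (S (S m) - 1)%nat with (S (S m - 1)) by lia; simpl pow; field; auto.
Qed.

Lemma Pm_rev_0 m : Pm_rev m 0 = 1.
Proof. induction m as [|[|m] IH]; [reflexivity | reflexivity | rewrite Pm_rev_S, IH by lia; ring]. Qed.

Lemma continuous_Pm_rev m x : continuous (Pm_rev m) x.
Proof.
  induction m as [|[|m] IH]; try apply continuous_Rconst.
  apply (continuous_ext (fun u => Pm_rev (S m) u * (1 - INR (S (S m)) ^ 2 * u)));
    [intros; symmetry; apply Pm_rev_S; lia |].
  apply continuous_Rmult; [exact IH |].
  apply continuous_Rminus; [apply continuous_Rconst |].
  apply continuous_Rmult; [apply continuous_Rconst | apply continuous_id].
Qed.

Lemma continuous_eq_at (A B : R -> R) (x : R) : continuous A x -> continuous B x ->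
  (forall u, u <> x -> A u = B u) -> A x = B x.
Proof.
  intros HA HB HAB.
  apply continuity_pt_filterlim, is_lim_continuity in HA, HB.
  apply (is_lim_ext_loc A B) in HA; [| exists (mkposreal _ Rlt_0_1); intros; apply HAB; auto].
  apply is_lim_unique in HA, HB; rewrite HA in HB; now injection HB.
Qed.

Lemma S_leading_coef m (Sc : nat -> R) : (2 <= m)%nat ->
  (forall t, (t - 1) * sumR 1 (m - 1) (fun k => Sc k * t ^ (k - 1)) = Pm m t - Pm m 1) ->
  Sc (m - 1)%nat = 1.
Proof.
  intros Hm HS.
  set (A u := (1 - u) * sumR 1 (m - 1) (fun k => Sc k * u ^ (m - 1 - k))).
  set (B u := Pm_rev m u - Pm m 1 * u ^ (m - 1)).
  assert (HAB : A 0 = B 0).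
  { apply continuous_eq_at.
    - apply continuous_Rmult.
      + apply continuous_Rminus; [apply continuous_Rconst | apply continuous_id].
      + apply continuous_sumR; intros k; apply continuous_Rmult;
          [apply continuous_Rconst | apply continuous_Rpow, continuous_id].
    - apply continuous_Rminus; [apply continuous_Pm_rev |].
      apply continuous_Rmult; [apply continuous_Rconst | apply continuous_Rpow, continuous_id].
    - intros u Hu; unfold A, B; rewrite <- Pm_rev_inv by (auto; lia).
      replace (u ^ (m - 1) * Pm m (/ u) - Pm m 1 * u ^ (m - 1))
        with (u ^ (m - 1) * (Pm m (/ u) - Pm m 1)) by ring.
      rewrite <- HS, <- Rmult_assoc, <- !sumR_scal; apply sumR_ext; intros k Hk.
      replace (m - 1)%nat with ((m - 1 - k) + (k - 1) + 1)%nat at 2 by lia.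
      rewrite !pow_add, pow_inv; field; split; [apply pow_nonzero |]; auto. }
  unfold A, B in HAB; rewrite Pm_rev_0 in HAB.
  replace (m - 1)%nat with (S (m - 2)) in HAB at 1 by lia.
  rewrite sumR_Sr, (sumR_ext 1 (m - 2) _ (fun _ => 0)), sumR_zero in HAB
    by (intros; rewrite pow_i by lia; ring).
  replace (1 + (m - 2))%nat with (m - 1)%nat in HAB by lia.
  rewrite Nat.sub_diag, pow_O, pow_i in HAB by lia; lra.
Qed.

(** * Spectral form of Q *)

Definition bessel_gap (f : R -> R) (N : nat) : R :=
  RInt (fun t => f t ^ 2) 0 (2 * PI) - bessel_sum 0 f N.

Definition deriv_pair (h : R -> R) (k : nat) (t : R) : R :=
  Derive_n h (k + 1) t + Derive_n h (k - 1) t.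

Lemma bessel_gap_nonneg f N : (forall x, continuous f x) -> 0 <= bessel_gap f N.
Proof.
  intros Hf; unfold bessel_gap; pose proof (bessel_inequality 0 f N (fun x _ => Hf x)) as Hb.
  rewrite Rplus_0_l in Hb; lra.
Qed.

Lemma fourier_cos_plus f g n : (forall x, continuous f x) -> (forall x, continuous g x) ->
  fourier_cos 0 (fun t => f t + g t) n = fourier_cos 0 f n + fourier_cos 0 g n.
Proof.
  intros Hf Hg; unfold fourier_cos.
  rewrite (RInt_Rext _ (fun t => f t * cos (INR n * t) + g t * cos (INR n * t))) by (intros; ring).
  apply RInt_Rplus; apply ex_RInt_mul_cos; intros x _; auto.
Qed.

Lemma fourier_sin_plus f g n : (forall x, continuous f x) -> (forall x, continuous g x) ->
  fourier_sin 0 (fun t => f t + g t) n = fourier_sin 0 f n + fourier_sin 0 g n.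
Proof.
  intros Hf Hg; unfold fourier_sin.
  rewrite (RInt_Rext _ (fun t => f t * sin (INR n * t) + g t * sin (INR n * t))) by (intros; ring).
  apply RInt_Rplus; apply ex_RInt_mul_sin; intros x _; auto.
Qed.

Section Spectrum.

Variables (m : nat) (h : R -> R).
Hypotheses (Hper : periodic h) (Hh : Cm m h).

Lemma fourier_coef_Derive_Sn j n : (j < m)%nat ->
  fourier_cos 0 (Derive_n h (S j)) n = INR n * fourier_sin 0 (Derive_n h j) n /\
  fourier_sin 0 (Derive_n h (S j)) n = - INR n * fourier_cos 0 (Derive_n h j) n.
Proof.
  intros Hj; pose proof (periodic_Derive_n h j Hper) as Hp.
  assert (Hd : forall x, ex_derive (Derive_n h j) x) by (intros; now apply (Cm_ex_derive m)).
  assert (Hc : forall x, continuous (Derive (Derive_n h j)) x)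
    by (intros x; exact (Cm_continuous m h (S j) x Hh Hj)).
  split; [apply fourier_cos_Derive | apply fourier_sin_Derive]; auto.
Qed.

Lemma fourier_energy_Derive_n j n : (j <= m)%nat ->
  fourier_energy (Derive_n h j) n = (INR n ^ 2) ^ j * fourier_energy h n.
Proof.
  induction j as [|j IH]; intros Hj; [rewrite pow_O, Rmult_1_l; reflexivity |].
  destruct (fourier_coef_Derive_Sn j n ltac:(lia)) as [Ec Es].
  specialize (IH ltac:(lia)); unfold fourier_energy in *; rewrite Ec, Es.
  change ((INR n ^ 2) ^ S j) with (INR n ^ 2 * (INR n ^ 2) ^ j); rewrite Rmult_assoc, <- IH; ring.
Qed.

Lemma fourier_energy_deriv_pair k n : (1 <= k)%nat -> (k + 1 <= m)%nat ->
  fourier_energy (deriv_pair h k) n = (1 - INR n ^ 2) ^ 2 * (INR n ^ 2) ^ (k - 1) * fourier_energy h n.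
Proof.
  intros Hk1 Hk2; rewrite Rmult_assoc, <- fourier_energy_Derive_n by lia.
  unfold deriv_pair, fourier_energy.
  rewrite fourier_cos_plus, fourier_sin_plus by (intros; apply (Cm_continuous m); auto; lia).
  replace (k + 1)%nat with (S (S (k - 1))) by lia.
  destruct (fourier_coef_Derive_Sn (S (k - 1)) n ltac:(lia)) as [E1 E2].
  destruct (fourier_coef_Derive_Sn (k - 1) n ltac:(lia)) as [E3 E4].
  rewrite E1, E2, E3, E4; ring.
Qed.

End Spectrum.

Lemma RInt_sq_spectral f N :
  sumR 0 (S N) (fun n => fourier_weight n * fourier_energy f n) + bessel_gap f N
  = RInt (fun t => f t ^ 2) 0 (2 * PI).
Proof. unfold bessel_gap, bessel_sum, fourier_energy; ring. Qed.

Lemma bessel_gap_lim f : periodic f -> Cm 1 f -> is_lim_seq (bessel_gap f) 0.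
Proof.
  intros Hp Hf; replace (Finite 0) with (Finite (RInt (fun t => f t ^ 2) 0 (2 * PI)
                                               - RInt (fun t => f t ^ 2) 0 (2 * PI))) by (f_equal; ring).
  apply is_lim_seq_minus'; [apply is_lim_seq_const | now apply parseval].
Qed.

Lemma is_lim_seq_sumR_0 a n (F : nat -> nat -> R) :
  (forall k, (a <= k < a + n)%nat -> is_lim_seq (F k) 0) ->
  is_lim_seq (fun N => sumR a n (fun k => F k N)) 0.
Proof.
  revert a; induction n as [|n IH]; intros a HF; [apply is_lim_seq_const |].
  replace (Finite 0) with (Finite (0 + 0)) by (f_equal; ring).
  apply (is_lim_seq_plus' (F a) (fun N => sumR (S a) n (fun k => F k N)));
    [apply HF; lia | apply IH; intros; apply HF; lia].
Qed.

Lemma periodic_plus f g : periodic f -> periodic g -> periodic (fun t => f t + g t).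
Proof. intros Hf Hg t; now rewrite Hf, Hg. Qed.

Lemma Cm_1_intro f : (forall x, ex_derive f x) -> (forall x, continuous (Derive f) x) -> Cm 1 f.
Proof. intros Hd Hc; split; [intros k Hk x; replace k with 0%nat by lia; apply Hd | exact Hc]. Qed.

Lemma Cm_1_plus f g : Cm 1 f -> Cm 1 g -> Cm 1 (fun t => f t + g t).
Proof.
  intros Hf Hg.
  assert (Hdf : forall x, ex_derive f x) by (intros; exact (Cm_ex_derive 1 f 0 x Hf ltac:(lia))).
  assert (Hdg : forall x, ex_derive g x) by (intros; exact (Cm_ex_derive 1 g 0 x Hg ltac:(lia))).
  apply Cm_1_intro; [intros; now apply (ex_derive_plus (V := R_NormedModule)) |].
  intros x; apply (continuous_ext (fun t => Derive f t + Derive g t));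
    [intros; symmetry; apply Derive_plus; auto |].
  apply continuous_Rplus;
    [exact (Cm_continuous 1 f 1 x Hf (le_n 1)) | exact (Cm_continuous 1 g 1 x Hg (le_n 1))].
Qed.

Lemma Cm_1_ext f g : (forall x, f x = g x) -> Cm 1 f -> Cm 1 g.
Proof.
  intros E Hf; apply Cm_1_intro.
  - intros x; apply (ex_derive_ext f); [exact E | exact (Cm_ex_derive 1 f 0 x Hf ltac:(lia))].
  - intros x; apply (continuous_ext (Derive f)); [intros; now apply Derive_ext |].
    exact (Cm_continuous 1 f 1 x Hf (le_n 1)).
Qed.

Lemma is_derive_sumR a n (F dF : nat -> R -> R) x :
  (forall k, is_derive (F k) x (dF k x)) ->
  is_derive (fun t => sumR a n (fun k => F k t)) x (sumR a n (fun k => dF k x)).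
Proof.
  intros HF; revert a; induction n as [|n IH]; intros a.
  - exact (is_derive_const (V := R_NormedModule) 0 x).
  - apply (is_derive_plus (V := R_NormedModule) (F a) (fun t => sumR (S a) n (fun k => F k t))); auto.
Qed.

Lemma is_derive_trig_poly al be N x :
  is_derive (trig_poly al be N) x (trig_poly (fun n => INR n * be n) (fun n => - INR n * al n) N x).
Proof.
  apply (is_derive_sumR 0 (S N) (fun n t => al n * cos (INR n * t) + be n * sin (INR n * t))
           (fun n t => INR n * be n * cos (INR n * t) + - INR n * al n * sin (INR n * t))).
  intros n; auto_derive; auto; ring.
Qed.

Lemma Derive_n_trig_poly al be N j :
  exists al' be', forall x, Derive_n (trig_poly al be N) j x = trig_poly al' be' N x.
Proof.
  induction j as [|j [al' [be' IH]]]; [now exists al, be |].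
  exists (fun n => INR n * be' n), (fun n => - INR n * al' n); intros x; simpl.
  rewrite (Derive_ext _ _ _ IH); apply is_derive_unique, is_derive_trig_poly.
Qed.

Lemma periodic_trig_poly al be N : periodic (trig_poly al be N).
Proof. intros t; apply sumR_ext; intros n _; now rewrite periodic_cos_nat, periodic_sin_nat. Qed.

Lemma Cm_1_trig_poly al be N : Cm 1 (trig_poly al be N).
Proof.
  apply Cm_1_intro; [intros; eexists; apply is_derive_trig_poly |].
  intros x; apply (continuous_ext (trig_poly (fun n => INR n * be n) (fun n => - INR n * al n) N));
    [intros; symmetry; apply is_derive_unique, is_derive_trig_poly | apply continuous_trig_poly].
Qed.

Definition Q_functional (m : nat) (h : R -> R) (Sc : nat -> R) : R :=
  (-1) ^ m / 2 * INR (fact (m - 1)) * INR (fact (m + 1))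
    * RInt (fun t => h t ^ 2 - Derive h t ^ 2) 0 (2 * PI)
  + (-1) ^ (m - 1) * (INR (fact m)) ^ 2 / (2 * PI) * (RInt h 0 (2 * PI)) ^ 2
  + sumR 1 (m - 1) (fun k => Sc k *
      RInt (fun t => (Derive_n h (k + 1) t + Derive_n h (k - 1) t) ^ 2) 0 (2 * PI)).

(* The factor by which the [n]-th Fourier mode of [h] enters [Q_functional]. *)
Definition Q_multiplier (m : nat) (Sc : nat -> R) (n : nat) : R :=
  (-1) ^ m / 2 * INR (fact (m - 1)) * INR (fact (m + 1)) * (1 - INR n ^ 2)
  + sumR 1 (m - 1) (fun k => Sc k * ((1 - INR n ^ 2) ^ 2 * (INR n ^ 2) ^ (k - 1)))
  + (if Nat.eqb n 0 then (-1) ^ (m - 1) * INR (fact m) ^ 2 else 0).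

Definition Q_spectral_sum (m : nat) (h : R -> R) (Sc : nat -> R) (N : nat) : R :=
  sumR 0 (S N) (fun n => fourier_weight n * fourier_energy h n * Q_multiplier m Sc n).

Section Multiplier.

Variables (m : nat) (Sc : nat -> R).
Hypotheses (Hm : (2 <= m)%nat)
  (HS : forall t, (t - 1) * sumR 1 (m - 1) (fun k => Sc k * t ^ (k - 1)) = Pm m t - Pm m 1).

Lemma Q_multiplier_eval n :
  Q_multiplier m Sc n
  = (INR n ^ 2 - 1) * Pm m (INR n ^ 2) + (if Nat.eqb n 0 then (-1) ^ (m - 1) * INR (fact m) ^ 2 else 0).
Proof.
  unfold Q_multiplier; set (x := INR n ^ 2).
  rewrite (sumR_ext 1 (m - 1) _ (fun k => (1 - x) ^ 2 * (Sc k * x ^ (k - 1)))), sumR_scal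
    by (intros; ring).
  replace ((1 - x) ^ 2 * sumR 1 (m - 1) (fun k => Sc k * x ^ (k - 1)))
    with ((x - 1) * ((x - 1) * sumR 1 (m - 1) (fun k => Sc k * x ^ (k - 1)))) by ring.
  rewrite HS, Pm_at_1 by lia; replace m with (S (m - 1)) at 1 by lia; simpl pow; field.
Qed.

Lemma Q_multiplier_zero n : (n <= m)%nat -> Q_multiplier m Sc n = 0.
Proof.
  intros Hn; rewrite Q_multiplier_eval.
  destruct (Nat.eqb_spec n 0) as [->|].
  { replace (INR 0 ^ 2) with 0 by (simpl; ring); rewrite Pm_at_0 by lia; ring. }
  destruct (Nat.eq_dec n 1) as [->|]; [simpl; ring |].
  rewrite Pm_root by lia; ring.
Qed.

Lemma Q_multiplier_pos n : (m < n)%nat -> 0 < Q_multiplier m Sc n.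
Proof.
  intros Hn; rewrite Q_multiplier_eval; destruct (Nat.eqb_spec n 0); [lia |].
  rewrite Rplus_0_r; apply Rmult_lt_0_compat; [| apply Pm_pos; lia].
  assert (Hn2 : INR 2 <= INR n) by (apply le_INR; lia); simpl in Hn2; nra.
Qed.

End Multiplier.

Section Decomposition.

Variables (m : nat) (h : R -> R) (Sc : nat -> R).
Hypotheses (Hm : (2 <= m)%nat) (Hper : periodic h) (Hh : Cm m h).

Let Hcont j x : (j <= m)%nat -> continuous (Derive_n h j) x.
Proof. intros; now apply (Cm_continuous m). Qed.

Let spectral_RInt_Derive_n j N : (j <= m)%nat ->
  RInt (fun t => Derive_n h j t ^ 2) 0 (2 * PI)
  = sumR 0 (S N) (fun n => fourier_weight n * ((INR n ^ 2) ^ j * fourier_energy h n))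
    + bessel_gap (Derive_n h j) N.
Proof.
  intros Hj; rewrite <- (RInt_sq_spectral _ N); f_equal; apply sumR_ext; intros.
  now rewrite (fourier_energy_Derive_n m h Hper Hh).
Qed.

Let spectral_RInt_deriv_pair k N : (1 <= k)%nat -> (k + 1 <= m)%nat ->
  RInt (fun t => deriv_pair h k t ^ 2) 0 (2 * PI)
  = sumR 0 (S N) (fun n => fourier_weight n *
      ((1 - INR n ^ 2) ^ 2 * (INR n ^ 2) ^ (k - 1) * fourier_energy h n))
    + bessel_gap (deriv_pair h k) N.
Proof.
  intros Hk1 Hk2; rewrite <- (RInt_sq_spectral _ N); f_equal; apply sumR_ext; intros.
  now rewrite (fourier_energy_deriv_pair m h Hper Hh).
Qed.

Let mean_sq_spectral N :
  (RInt h 0 (2 * PI)) ^ 2 / (2 * PI)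
  = sumR 0 (S N) (fun n => if Nat.eqb n 0 then fourier_weight n * fourier_energy h n else 0).
Proof.
  rewrite sumR_delta; simpl.
  unfold fourier_energy, fourier_weight, cos_sq_int, fourier_cos; rewrite fourier_sin_0; simpl.
  rewrite (RInt_Rext (fun t => h t * cos (0 * t)) h) by (intros; rewrite Rmult_0_l, cos_0; ring).
  rewrite Rplus_0_l; field; apply PI_neq0.
Qed.

Lemma Q_decomposition N :
  Q_functional m h Sc
  = Q_spectral_sum m h Sc N
    + ((-1) ^ m / 2 * INR (fact (m - 1)) * INR (fact (m + 1))
         * (bessel_gap h N - bessel_gap (Derive h) N)
       + sumR 1 (m - 1) (fun k => Sc k * bessel_gap (deriv_pair h k) N)).
Proof.
  unfold Q_functional, Q_spectral_sum, Q_multiplier.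
  change (fun t => h t ^ 2 - Derive h t ^ 2)
    with (fun t => Derive_n h 0 t ^ 2 - Derive_n h 1 t ^ 2).
  rewrite RInt_Rminus by (apply ex_RInt_of_continuous; intros; apply continuous_Rpow, Hcont; lia).
  rewrite !spectral_RInt_Derive_n with (N := N) by lia.
  replace ((-1) ^ (m - 1) * INR (fact m) ^ 2 / (2 * PI) * RInt h 0 (2 * PI) ^ 2)
    with ((-1) ^ (m - 1) * INR (fact m) ^ 2 * (RInt h 0 (2 * PI) ^ 2 / (2 * PI)))
    by (field; apply PI_neq0).
  rewrite (mean_sq_spectral N).
  rewrite (sumR_ext 1 (m - 1) _ (fun k => Sc k * (sumR 0 (S N) (fun n => fourier_weight n *
             ((1 - INR n ^ 2) ^ 2 * (INR n ^ 2) ^ (k - 1) * fourier_energy h n))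
             + bessel_gap (deriv_pair h k) N)))
    by (intros k Hk; rewrite <- spectral_RInt_deriv_pair by lia; reflexivity).
  rewrite (sumR_ext 1 (m - 1) _ (fun k => sumR 0 (S N) (fun n => fourier_weight n * fourier_energy h n *
             (Sc k * ((1 - INR n ^ 2) ^ 2 * (INR n ^ 2) ^ (k - 1))))
           + Sc k * bessel_gap (deriv_pair h k) N))
    by (intros; rewrite Rmult_plus_distr_l, <- sumR_scal; f_equal; apply sumR_ext; intros; ring).
  rewrite sumR_plus, sumR_swap.
  set (al := (-1) ^ m / 2 * INR (fact (m - 1)) * INR (fact (m + 1))).
  set (be := (-1) ^ (m - 1) * INR (fact m) ^ 2).
  rewrite (sumR_ext 0 (S N)
    (fun n => fourier_weight n * fourier_energy h n * (al * (1 - INR n ^ 2)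
       + sumR 1 (m - 1) (fun k => Sc k * ((1 - INR n ^ 2) ^ 2 * (INR n ^ 2) ^ (k - 1)))
       + (if Nat.eqb n 0 then be else 0)))
    (fun n => al * (fourier_weight n * ((INR n ^ 2) ^ 0 * fourier_energy h n))
       + - al * (fourier_weight n * ((INR n ^ 2) ^ 1 * fourier_energy h n))
       + sumR 1 (m - 1) (fun k => fourier_weight n * fourier_energy h n
                                   * (Sc k * ((1 - INR n ^ 2) ^ 2 * (INR n ^ 2) ^ (k - 1))))
       + be * (if Nat.eqb n 0 then fourier_weight n * fourier_energy h n else 0)))
    by (intros n _; rewrite sumR_scal; destruct (Nat.eqb n 0); ring).
  rewrite !sumR_plus, !sumR_scal.
  change (bessel_gap (Derive_n h 0) N) with (bessel_gap h N).
  change (bessel_gap (Derive_n h 1) N) with (bessel_gap (Derive h) N).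
  ring.
Qed.

End Decomposition.

Lemma eq_fourier_sum_of_vanishing_coefs f m :
  periodic f -> (forall x, ex_derive f x) ->
  (forall n, (m < n)%nat -> fourier_cos 0 f n = 0 /\ fourier_sin 0 f n = 0) ->
  forall x, f x = fourier_sum 0 f m x.
Proof.
  intros Hp Hd Hz x.
  assert (Hconst : is_lim_seq (fun N => fourier_sum 0 f N x) (fourier_sum 0 f m x)).
  { apply (is_lim_seq_ext_loc (fun _ => fourier_sum 0 f m x)); [| apply is_lim_seq_const].
    exists m; intros N HN; unfold fourier_sum, trig_poly.
    replace (S N) with (S m + (N - m))%nat by lia; rewrite sumR_split.
    rewrite (sumR_ext (0 + S m) (N - m) _ (fun _ => 0)), sumR_zero; [ring |].
    intros k Hk; destruct (Hz k ltac:(lia)) as [-> ->]; ring. }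
  apply is_lim_seq_unique in Hconst.
  rewrite (is_lim_seq_unique _ _ (fourier_sum_pointwise f x Hp Hd)) in Hconst.
  now injection Hconst.
Qed.

Section MainArgument.

Variables (m : nat) (h : R -> R) (Sc : nat -> R).
Hypotheses (Hm : (2 <= m)%nat) (Hper : periodic h) (Hh : Cm m h)
  (HS : forall t, (t - 1) * sumR 1 (m - 1) (fun k => Sc k * t ^ (k - 1)) = Pm m t - Pm m 1).

Let spectral_term_nonneg n : 0 <= fourier_weight n * fourier_energy h n * Q_multiplier m Sc n.
Proof.
  apply Rmult_le_pos;
    [apply Rmult_le_pos; [left; apply fourier_weight_pos | apply fourier_energy_nonneg] |].
  destruct (le_lt_dec n m);
    [right; symmetry; now apply Q_multiplier_zero | left; now apply Q_multiplier_pos].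
Qed.

Let spectral_sum_nonneg N : 0 <= Q_spectral_sum m h Sc N.
Proof. apply sumR_nonneg; intros; apply spectral_term_nonneg. Qed.

Let top_gap_nonneg N : 0 <= bessel_gap (deriv_pair h (m - 1)) N.
Proof. apply bessel_gap_nonneg; intros x; apply continuous_Rplus; apply (Cm_continuous m); auto; lia. Qed.

(* All the remainders except the top one tend to [0] by Parseval; the top one involves the
   merely continuous [m]-th derivative, but it enters with coefficient [Sc (m - 1) = 1] and is
   nonnegative by Bessel's inequality. *)
Lemma Q_functional_limit :
  is_lim_seq (fun N => Q_spectral_sum m h Sc N + bessel_gap (deriv_pair h (m - 1)) N)
             (Q_functional m h Sc).
Proof.
  set (al := (-1) ^ m / 2 * INR (fact (m - 1)) * INR (fact (m + 1))).
  set (rest N := al * (bessel_gap h N - bessel_gap (Derive h) N)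
                 + sumR 1 (m - 2) (fun k => Sc k * bessel_gap (deriv_pair h k) N)).
  assert (Hrest : is_lim_seq rest 0).
  { assert (Hgap : forall j, (j < m)%nat -> is_lim_seq (bessel_gap (Derive_n h j)) 0)
      by (intros; apply bessel_gap_lim; [apply periodic_Derive_n | apply (Cm_Derive_n m)]; auto).
    replace (Finite 0) with (Finite (al * (0 - 0) + 0)) by (f_equal; ring).
    apply is_lim_seq_plus'; [apply (is_lim_seq_scal_l _ al (0 - 0)), is_lim_seq_minus' |].
    - apply (Hgap 0%nat); lia.
    - apply (Hgap 1%nat); lia.
    - apply is_lim_seq_sumR_0; intros k Hk.
      replace (Finite 0) with (Rbar_mult (Sc k) 0) by (simpl; f_equal; ring).
      apply is_lim_seq_scal_l, bessel_gap_lim.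
      + apply periodic_plus; apply periodic_Derive_n; auto.
      + apply Cm_1_plus; apply (Cm_Derive_n m); auto; lia. }
  apply (is_lim_seq_ext (fun N => Q_functional m h Sc - rest N)).
  - intros N; rewrite (Q_decomposition m h Sc Hm Hper Hh N).
    replace (m - 1)%nat with (S (m - 2)) at 2 by lia.
    rewrite (sumR_Sr 1 (m - 2)); replace (1 + (m - 2))%nat with (m - 1)%nat by lia.
    rewrite (S_leading_coef m Sc Hm HS); unfold Q_spectral_sum, rest, al; ring.
  - replace (Finite (Q_functional m h Sc)) with (Finite (Q_functional m h Sc - 0)) by (f_equal; ring).
    apply is_lim_seq_minus'; [apply is_lim_seq_const | exact Hrest].
Qed.

Lemma Q_functional_nonneg : 0 <= Q_functional m h Sc.
Proof.
  change (Rbar_le 0 (Q_functional m h Sc)).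
  apply (is_lim_seq_le (fun _ => 0)
           (fun N => Q_spectral_sum m h Sc N + bessel_gap (deriv_pair h (m - 1)) N));
    [| apply is_lim_seq_const | apply Q_functional_limit].
  intros N; pose proof (spectral_sum_nonneg N); pose proof (top_gap_nonneg N); lra.
Qed.

Lemma fourier_coefs_vanish_of_Q_zero : Q_functional m h Sc = 0 ->
  forall n, (m < n)%nat -> fourier_cos 0 h n = 0 /\ fourier_sin 0 h n = 0.
Proof.
  intros HQ n Hn.
  assert (Hterm : fourier_weight n * fourier_energy h n * Q_multiplier m Sc n <= 0).
  { rewrite <- HQ; change (Rbar_le (fourier_weight n * fourier_energy h n * Q_multiplier m Sc n)
                                   (Q_functional m h Sc)).
    apply (is_lim_seq_le_loc (fun _ => fourier_weight n * fourier_energy h n * Q_multiplier m Sc n)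
             (fun N => Q_spectral_sum m h Sc N + bessel_gap (deriv_pair h (m - 1)) N));
      [| apply is_lim_seq_const | apply Q_functional_limit].
    exists n; intros N HN; pose proof (top_gap_nonneg N).
    assert (fourier_weight n * fourier_energy h n * Q_multiplier m Sc n <= Q_spectral_sum m h Sc N)
      by (apply (sumR_ge_term 0 (S N) (fun n => fourier_weight n * fourier_energy h n
                                                 * Q_multiplier m Sc n));
          [intros; apply spectral_term_nonneg | lia]).
    lra. }
  pose proof (fourier_weight_pos n) as Hw; pose proof (Q_multiplier_pos m Sc Hm HS n Hn) as Hq.
  assert (He : fourier_energy h n <= 0).
  { apply Rnot_lt_le; intros He.
    pose proof (Rmult_lt_0_compat _ _ (Rmult_lt_0_compat _ _ Hw He) Hq); lra. }
  unfold fourier_energy in He.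
  pose proof (pow2_ge_0 (fourier_cos 0 h n)); pose proof (pow2_ge_0 (fourier_sin 0 h n)).
  split; apply Rsqr_0_uniq; unfold Rsqr; simpl in *; nra.
Qed.

Lemma Q_zero_of_trig_poly :
  (exists al be, forall t, h t = trig_poly al be m t) -> Q_functional m h Sc = 0.
Proof.
  intros [al [be Hab]].
  assert (Henergy : forall n, (m < n)%nat -> fourier_energy h n = 0).
  { intros n Hn; unfold fourier_energy, fourier_cos, fourier_sin.
    rewrite !(RInt_Rext (fun t => h t * _ (INR n * t)) (fun t => trig_poly al be m t * _ (INR n * t)))
      by (intros; now rewrite Hab).
    fold (fourier_cos 0 (trig_poly al be m) n) (fourier_sin 0 (trig_poly al be m) n).
    rewrite fourier_cos_trig_poly, fourier_sin_trig_poly.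
    destruct (Nat.leb_spec n m); [lia | ring]. }
  assert (Hspectral : forall N, Q_spectral_sum m h Sc N = 0).
  { intros N; rewrite <- (sumR_zero 0 (S N)); apply sumR_ext; intros n _.
    destruct (le_lt_dec n m); [rewrite Q_multiplier_zero | rewrite Henergy]; auto; ring. }
  assert (Hderiv : forall j, exists al' be', forall t, Derive_n h j t = trig_poly al' be' m t).
  { intros j; destruct (Derive_n_trig_poly al be m j) as [al' [be' E]]; exists al', be'.
    intros t; rewrite <- E; now apply Derive_n_ext. }
  destruct (Hderiv (m - 1 + 1)%nat) as [a1 [b1 E1]], (Hderiv (m - 1 - 1)%nat) as [a2 [b2 E2]].
  assert (Epair : forall t, deriv_pair h (m - 1) t = trig_poly a1 b1 m t + trig_poly a2 b2 m t)
    by (intros; unfold deriv_pair; now rewrite E1, E2).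
  assert (Htop : is_lim_seq (bessel_gap (deriv_pair h (m - 1))) 0).
  { apply bessel_gap_lim.
    - intros t; rewrite !Epair; apply periodic_plus; apply periodic_trig_poly.
    - apply (Cm_1_ext (fun t => trig_poly a1 b1 m t + trig_poly a2 b2 m t));
        [intros; now rewrite Epair | apply Cm_1_plus; apply Cm_1_trig_poly]. }
  pose proof Q_functional_limit as Hlim.
  apply (is_lim_seq_ext _ (bessel_gap (deriv_pair h (m - 1)))) in Hlim;
    [| intros; rewrite Hspectral; ring].
  apply is_lim_seq_unique in Hlim, Htop; rewrite Htop in Hlim.
  now injection Hlim.
Qed.

End MainArgument.

Theorem proposition2p3 (m : nat) (h : R -> R) (S : nat -> R) :
  (2 <= m)%nat ->
  (forall t, h (t + 2 * PI) = h t) ->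
  Cm m h ->
  (* S_{m,1..m-1} are the coefficients of (P_m(t) - P_m(1)) / (t - 1) *)
  (forall t, (t - 1) * sumR 1 (m - 1) (fun k => S k * t ^ (k - 1)) = Pm m t - Pm m 1) ->
  let Q :=
    (-1) ^ m / 2 * INR (fact (m - 1)) * INR (fact (m + 1))
      * RInt (fun t => h t ^ 2 - Derive h t ^ 2) 0 (2 * PI)
    + (-1) ^ (m - 1) * (INR (fact m)) ^ 2 / (2 * PI) * (RInt h 0 (2 * PI)) ^ 2
    + sumR 1 (m - 1) (fun k => S k *
        RInt (fun t => (Derive_n h (k + 1) t + Derive_n h (k - 1) t) ^ 2) 0 (2 * PI)) in
  0 <= Q /\
  (Q = 0 <->
   exists alpha beta : nat -> R, forall t,
     h t = sumR 0 (m + 1) (fun n => alpha n * cos (INR n * t) + beta n * sin (INR n * t))).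
Proof.
  intros Hm Hper Hh HS Q; change Q with (Q_functional m h S).
  rewrite Nat.add_1_r; split; [| split].
  - exact (Q_functional_nonneg m h S Hm Hper Hh HS).
  - intros HQ.
    exists (fun n => fourier_weight n * fourier_cos 0 h n),
           (fun n => fourier_weight n * fourier_sin 0 h n).
    apply eq_fourier_sum_of_vanishing_coefs; auto.
    + intros x; exact (Cm_ex_derive m h 0 x Hh ltac:(lia)).
    + exact (fourier_coefs_vanish_of_Q_zero m h S Hm Hper Hh HS HQ).
  - intros Htrig; exact (Q_zero_of_trig_poly m h S Hm Hper Hh HS Htrig).
Qed.
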